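(* Let $a,b,c,d,e\in\mathbb{R}$ and let $\alpha_i(t)$ ($i=1,\dots,5$) be arbitrary scalar continuous odd functions on $\mathbb{R}$. Consider the generalized Langford system $$\dot x=ax+by+xz,\quad \dot y=cx+dy+yz,\quad \dot z=ez-(x^2+y^2+z^2),\qquad (x,y,z)\in\mathbb{R}^3. \tag{L}$$ Then: (i) the Mironenko reflecting function of (L) coincides with that of the system $$\dot x=(ax+by+xz)(1+\alpha_1(t)),\quad \dot y=(cx+dy+yz)(1+\alpha_1(t)),\quad \dot z=\big(ez-(x^2+y^2+z^2)\big)(1+\alpha_1(t));$$ (ii) if $c=-b$, $d=a$, the Mironenko reflecting function of (L) coincides with that of the system $$\begin{aligned}\dot x&=(ax+by+xz)(1+\alpha_1(t))+x(a+z)\alpha_2(t)+y\alpha_3(t),\\ \dot y&=(-bx+ay+yz)(1+\alpha_1(t))+y(a+z)\alpha_2(t)-x\alpha_3(t),\\ \dot z&=(ez-x^2-y^2-z^2)(1+\alpha_1(t)+\alpha_2(t));\end{aligned}$$ (iii) if $c=-b$, $d=a$, $e=-2a$, the Mironenko reflecting function of (L) coincides with that of the system $$\begin{aligned}\dot x&=(ax+by+xz)(1+\alpha_1(t))+x(a+z)\alpha_2(t)+y\alpha_3(t)-y(x^2+y^2)(4az+x^2+y^2+2z^2)\alpha_4(t),\\ \dot y&=(-bx+ay+yz)(1+\alpha_1(t))+y(a+z)\alpha_2(t)-x\alpha_3(t)+x(x^2+y^2)(4az+x^2+y^2+2z^2)\alpha_4(t),\\ \dot z&=-(2az+x^2+y^2+z^2)(1+\alpha_1(t)+\alpha_2(t));\end{aligned}$$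 (iv) if $c=b=0$, $d=a$, $e=-2a$, the Mironenko reflecting function of (L) coincides with that of the system $$\begin{aligned}\dot x&=(ax+xz)(1+\alpha_1(t))+y\alpha_2(t)+y(4az+x^2+y^2+2z^2)\big(x^2\alpha_3(t)+xy\alpha_4(t)+y^2\alpha_5(t)\big),\\ \dot y&=(ay+yz)(1+\alpha_1(t))-x\alpha_2(t)-x(4az+x^2+y^2+2z^2)\big(x^2\alpha_3(t)+xy\alpha_4(t)+y^2\alpha_5(t)\big),\\ \dot z&=-(2az+x^2+y^2+z^2)(1+\alpha_1(t)).\end{aligned}$$
   Context: For a system $\dot x=X(t,x)$, $t\in\mathbb{R}$, $x\in D\subset\mathbb{R}^n$, with continuously differentiable right-hand side, let $x=\varphi(t;t_0,x_0)$ denote its general solution in Cauchy form (the solution with $\varphi(t_0;t_0,x_0)=x_0$). The Mironenko reflecting function (MRF) of the system is $F(t,x):=\varphi(-t;t,x)$, defined where this makes sense. *)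

From Stdlib Require Import Reals.
Open Scope R_scope.

(* A (nonautonomous) system  (x,y,z)' = X(t,x,y,z)  on R^3. *)
Definition system := R -> R -> R -> R -> R * R * R.

Definition cx (p : R * R * R) : R := fst (fst p).
Definition cy (p : R * R * R) : R := snd (fst p).
Definition cz (p : R * R * R) : R := snd p.

Definition is_solution (X : system) (lo hi : R) (u v w : R -> R) : Prop :=
  forall s, lo < s < hi ->
    derivable_pt_lim u s (cx (X s (u s) (v s) (w s))) /\
    derivable_pt_lim v s (cy (X s (u s) (v s) (w s))) /\
    derivable_pt_lim w s (cz (X s (u s) (v s) (w s))).

(* Graph of the Mironenko reflecting function F(t,p) := phi(-t; t, p):
   [MRF X t p q] holds iff the solution of X through (t,p) is defined on
   (a neighbourhood of) the whole segment between -t and t, and its value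
   at time -t is q.  (By uniqueness of solutions this relation is
   functional wherever it holds; it is exactly "F(t,p) is defined and
   equals q".) *)
Definition MRF (X : system) (t : R) (p q : R * R * R) : Prop :=
  exists (lo hi : R) (u v w : R -> R),
    lo < - Rabs t /\ Rabs t < hi /\
    is_solution X lo hi u v w /\
    u t = cx p /\ v t = cy p /\ w t = cz p /\
    u (- t) = cx q /\ v (- t) = cy q /\ w (- t) = cz q.

Definition same_MRF (X1 X2 : system) : Prop :=
  forall t p q1 q2, MRF X1 t p q1 -> MRF X2 t p q2 -> q1 = q2.

Definition odd_fun (f : R -> R) : Prop := forall t, f (- t) = - f t.

Definition langford (a b c d e : R) : system := fun t x y z =>
  (a*x + b*y + x*z,
   c*x + d*y + y*z,
   e*z - (x^2 + y^2 + z^2)).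

Definition sys_i (a b c d e : R) (al1 : R -> R) : system := fun t x y z =>
  ((a*x + b*y + x*z) * (1 + al1 t),
   (c*x + d*y + y*z) * (1 + al1 t),
   (e*z - (x^2 + y^2 + z^2)) * (1 + al1 t)).

Definition sys_ii (a b e : R) (al1 al2 al3 : R -> R) : system := fun t x y z =>
  ((a*x + b*y + x*z) * (1 + al1 t) + x*(a + z)*al2 t + y*al3 t,
   (- b*x + a*y + y*z) * (1 + al1 t) + y*(a + z)*al2 t - x*al3 t,
   (e*z - x^2 - y^2 - z^2) * (1 + al1 t + al2 t)).

Definition sys_iii (a b : R) (al1 al2 al3 al4 : R -> R) : system := fun t x y z =>
  ((a*x + b*y + x*z) * (1 + al1 t) + x*(a + z)*al2 t + y*al3 t
     - y*(x^2 + y^2)*(4*a*z + x^2 + y^2 + 2*z^2)*al4 t,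
   (- b*x + a*y + y*z) * (1 + al1 t) + y*(a + z)*al2 t - x*al3 t
     + x*(x^2 + y^2)*(4*a*z + x^2 + y^2 + 2*z^2)*al4 t,
   - (2*a*z + x^2 + y^2 + z^2) * (1 + al1 t + al2 t)).

Definition sys_iv (a : R) (al1 al2 al3 al4 al5 : R -> R) : system := fun t x y z =>
  ((a*x + x*z) * (1 + al1 t) + y*al2 t
     + y*(4*a*z + x^2 + y^2 + 2*z^2)*(x^2*al3 t + x*y*al4 t + y^2*al5 t),
   (a*y + y*z) * (1 + al1 t) - x*al2 t
     - x*(4*a*z + x^2 + y^2 + 2*z^2)*(x^2*al3 t + x*y*al4 t + y^2*al5 t),
   - (2*a*z + x^2 + y^2 + z^2) * (1 + al1 t)).

From Stdlib Require Import Reals Lra Psatz ClassicalEpsilon.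
From Coquelicot Require Import Coquelicot.
Open Scope R_scope.

(* Each system of (i)-(iv) is obtained from a simpler one by operations that leave the
   reflecting function F(t, p) = phi(-t; t, p) unchanged.

   Multiplying an autonomous field by 1 + al(s), with al odd, is the change of time
   sigma(s) = s + int_t^s al: solutions of the new system are the old solutions run along
   sigma, and sigma fixes both t and -t because al is odd.  This gives (i).

   When c = -b and d = a, the systems of (ii)-(iv) rotate the (x, y)-plane with some angular
   speed k(s) on top of (1 + al) times the radial field (L with b = c = 0, d = a).  In the
   frame turned by beta, beta' = k, beta(t) = 0, they become (1 + al) times the radial field,
   so their reflecting functions agree with that of (L) once the total angles beta(-t) agree.
   In (ii) the angles differ by an integral over [t, -t] of an odd function; in (iii) the same
   holds after using that (x^2 + y^2)(4az + x^2 + y^2 + 2z^2) is a first integral.  In (iv),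
   where e = -2a, the products of h = 4az + x^2 + y^2 + 2z^2 with quadratic forms in (x, y) are
   first integrals of the radial field, so (cos beta, sin beta) solves a planar system that is
   odd in time; its solution is even, whence beta(-t) is a multiple of 2 pi.

   Following a solution of the time-changed system back through sigma, which need not be
   monotone, uses local existence (Picard iteration) and uniqueness (Gronwall) for locally
   Lipschitz fields. *)

Lemma eq_of_derivable_pt_lim_0 (f : R -> R) lo hi a b :
  (forall r, lo < r < hi -> derivable_pt_lim f r 0) ->
  lo < a < hi -> lo < b < hi -> f a = f b.
Proof.
  intros H0 Ha Hb.
  assert (Hlt : forall a b, lo < a < hi -> lo < b < hi -> a < b -> f a = f b).
  { intros a' b' Ha' Hb' Hab.
    destruct (MVT_cor2 f (fun _ => 0) a' b' Hab) as [c [Hc _]];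
      [intros c Hc; apply H0; lra | lra]. }
  destruct (Rtotal_order a b) as [Hab | [-> | Hab]]; auto.
  symmetry; auto.
Qed.

Lemma derivable_pt_lim_comp_opp f s l :
  derivable_pt_lim f (- s) l -> derivable_pt_lim (fun r => f (- r)) s (- l).
Proof.
  intros H. replace (- l) with (l * -1) by ring.
  apply (derivable_pt_lim_comp (fun r => - r) f s (-1) l); auto.
  apply is_derive_Reals. auto_derive; auto.
Qed.

Lemma derivable_pt_lim_locally_eq f g x l lo hi :
  lo < x < hi -> (forall y, lo < y < hi -> g y = f y) ->
  derivable_pt_lim f x l -> derivable_pt_lim g x l.
Proof.
  intros Hx E H. apply is_derive_Reals. apply is_derive_Reals in H.
  apply (is_derive_ext_loc f); auto.
  assert (Hd : 0 < Rmin (x - lo) (hi - x)) by (apply Rmin_pos; lra).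
  exists (mkposreal _ Hd). intros y Hy. symmetry. apply E.
  change (Rabs (y - x) < Rmin (x - lo) (hi - x)) in Hy.
  apply Rabs_def2 in Hy. pose proof (Rmin_l (x - lo) (hi - x)).
  pose proof (Rmin_r (x - lo) (hi - x)). lra.
Qed.

Lemma derivable_pt_lim_RInt k lo hi t0 s :
  (forall r, lo < r < hi -> continuity_pt k r) -> lo < t0 < hi -> lo < s < hi ->
  derivable_pt_lim (fun r => RInt k t0 r) s (k s).
Proof.
  intros Hk Ht Hs. apply is_derive_Reals.
  apply (is_derive_RInt k _ t0 s); [| apply continuity_pt_filterlim, Hk; auto].
  assert (Hd : 0 < Rmin (s - lo) (hi - s)) by (apply Rmin_pos; lra).
  exists (mkposreal _ Hd). intros y Hy.
  change (Rabs (y - s) < Rmin (s - lo) (hi - s)) in Hy. apply Rabs_def2 in Hy.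
  pose proof (Rmin_l (s - lo) (hi - s)). pose proof (Rmin_r (s - lo) (hi - s)).
  apply (RInt_correct (V := R_CompleteNormedModule)), ex_RInt_continuous.
  intros z Hz. apply continuity_pt_filterlim, Hk.
  revert Hz. unfold Rmin, Rmax. destruct Rle_dec; lra.
Qed.

Lemma derivable_pt_lim_RInt_continuous k t0 s :
  continuity k -> derivable_pt_lim (fun r => RInt k t0 r) s (k s).
Proof.
  intros Hk. apply (derivable_pt_lim_RInt k (Rmin t0 s - 1) (Rmax t0 s + 1));
    [intros; apply Hk | |]; unfold Rmin, Rmax; destruct Rle_dec; lra.
Qed.

Lemma RInt_odd al t : continuity al -> odd_fun al -> RInt al t (- t) = 0.
Proof.
  intros Hc Ho.
  assert (Hex : ex_RInt al (- t) t).
  { apply (ex_RInt_continuous (V := R_CompleteNormedModule)).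
    intros; apply continuity_pt_filterlim, Hc. }
  pose proof (RInt_correct (V := R_CompleteNormedModule) _ _ _ Hex) as Hr.
  rewrite <- (Ropp_involutive t) in Hr at 2.
  apply (is_RInt_comp_opp (V := R_NormedModule)) in Hr.
  apply (is_RInt_ext _ al) in Hr.
  2: { intros y _. change (- al (- y) = al y). rewrite Ho. apply Ropp_involutive. }
  apply (is_RInt_unique (V := R_CompleteNormedModule)) in Hr.
  pose proof (opp_RInt_swap (V := R_CompleteNormedModule) al _ _ Hex) as Hs.
  change (- RInt al (- t) t = RInt al t (- t)) in Hs. lra.
Qed.

Lemma continuous_bounded_on f a b :
  (forall r, a <= r <= b -> continuity_pt f r) ->
  exists B, 0 <= B /\ forall r, a <= r <= b -> Rabs (f r) <= B.
Proof.
  intros H. destruct (Rle_dec a b) as [Hab | Hab].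
  - destruct (continuity_ab_maj (fun r => Rabs (f r)) a b Hab) as [c [Hc _]].
    { intros r Hr. apply (continuity_pt_comp f Rabs); auto. apply Rcontinuity_abs. }
    exists (Rabs (f c)). split; auto using Rabs_pos.
  - exists 0. split; intros; lra.
Qed.

Lemma Rabs_interval t lo hi : lo < - Rabs t -> Rabs t < hi -> lo < t < hi /\ lo < - t < hi.
Proof. intros. pose proof (Rle_abs t). pose proof (Rle_abs (- t)). rewrite Rabs_Ropp in *. lra. Qed.

Lemma continuity_pt_pow f n x : continuity_pt f x -> continuity_pt (fun r => f r ^ n) x.
Proof.
  intros H. induction n as [| n IH]; [apply continuity_pt_const; intros ? ?; reflexivity |].
  apply (continuity_pt_mult f (fun r => f r ^ n)); auto.
Qed.

Ltac solve_continuity_pt :=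
  repeat first
    [ apply continuity_pt_plus | apply continuity_pt_minus | apply continuity_pt_mult
    | apply continuity_pt_opp | apply continuity_pt_pow
    | apply continuity_pt_const; intros ? ?; reflexivity | assumption
    | match goal with H : continuity ?f |- continuity_pt ?f _ => apply H end ].

Ltac solve_continuity := intros ?; solve_continuity_pt.

Ltac derive_along :=
  apply is_derive_Reals; auto_derive;
  [ repeat split; eexists; eassumption
  | repeat match goal with
           | H : is_derive _ ?s ?l |- context [Derive ?v ?s] =>
               rewrite (is_derive_unique v s l H)
           end ].


Lemma gronwall_zero_forward (D D' : R -> R) K s0 s :
  s0 <= s -> (forall r, s0 <= r <= s -> derivable_pt_lim D r (D' r)) ->
  (forall r, s0 <= r <= s -> 0 <= D r /\ D' r <= K * D r) ->
  D s0 = 0 -> D s = 0.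
Proof.
  intros Hs HD HB H0.
  destruct (Req_dec s0 s) as [<- | Hne]; auto.
  (* [D r * exp (- K r)] is nonincreasing and vanishes at [s0]. *)
  destruct (MVT_cor2 (fun r => D r * exp (- K * r))
              (fun r => (D' r - K * D r) * exp (- K * r)) s0 s) as [c [Hc Hcs]]; [lra | |].
  { intros c Hc.
    assert (He : derivable_pt_lim (fun r => exp (- K * r)) c (- K * exp (- K * c))).
    { apply is_derive_Reals. auto_derive; auto. ring. }
    replace ((D' c - K * D c) * exp (- K * c))
      with (D' c * exp (- K * c) + D c * (- K * exp (- K * c))) by ring.
    apply (derivable_pt_lim_mult D (fun r => exp (- K * r))); [apply HD; lra | exact He]. }
  rewrite H0, Rmult_0_l, Rminus_0_r in Hc.
  destruct (HB c) as [_ Hc']; [lra |]. destruct (HB s) as [Hs' _]; [lra |].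
  pose proof (exp_pos (- K * c)). pose proof (exp_pos (- K * s)).
  assert (D s * exp (- K * s) <= 0) by (rewrite Hc; apply Rmult_le_0_r; [nra | lra]).
  nra.
Qed.

Lemma gronwall_zero (D D' : R -> R) K a b s0 s :
  a <= s0 <= b -> a <= s <= b ->
  (forall r, a <= r <= b -> derivable_pt_lim D r (D' r)) ->
  (forall r, a <= r <= b -> 0 <= D r /\ Rabs (D' r) <= K * D r) ->
  D s0 = 0 -> D s = 0.
Proof.
  intros H0 H1 HD HB Hz.
  destruct (Rle_dec s0 s) as [Hle | Hle].
  - apply (gronwall_zero_forward D D' K s0 s); auto; intros r Hr.
    + apply HD; lra.
    + destruct (HB r) as [? HK]; [lra |]. apply Rabs_le_between in HK. lra.
  - rewrite <- (Ropp_involutive s).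
    apply (gronwall_zero_forward (fun r => D (- r)) (fun r => - D' (- r)) K (- s0) (- s));
      [lra | | | rewrite Ropp_involutive; auto]; intros r Hr.
    + apply derivable_pt_lim_comp_opp, HD; lra.
    + destruct (HB (- r)) as [? HK]; [lra |]. apply Rabs_le_between in HK. lra.
Qed.

Definition clamp (lo hi x : R) : R := Rmax lo (Rmin hi x).

Lemma clamp_between lo hi x : lo <= hi -> lo <= clamp lo hi x <= hi.
Proof. unfold clamp, Rmax, Rmin. repeat destruct Rle_dec; lra. Qed.

Lemma clamp_id lo hi x : lo <= x <= hi -> clamp lo hi x = x.
Proof. unfold clamp, Rmax, Rmin. repeat destruct Rle_dec; lra. Qed.

Lemma clamp_lipschitz lo hi x y : lo <= hi -> Rabs (clamp lo hi x - clamp lo hi y) <= Rabs (x - y).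
Proof. unfold clamp, Rmax, Rmin, Rabs. repeat destruct Rle_dec; repeat destruct Rcase_abs; lra. Qed.

Lemma lipschitz_continuity_pt g K :
  (forall s s', Rabs (g s - g s') <= K * Rabs (s - s')) -> forall z, continuity_pt g z.
Proof.
  intros H z eps Heps.
  assert (HK : 0 < Rabs K + 1) by (pose proof (Rabs_pos K); lra).
  exists (eps / (Rabs K + 1)). split; [apply Rdiv_lt_0_compat; lra |].
  intros x [_ Hx]. simpl in *. unfold R_dist in *.
  eapply Rle_lt_trans; [apply H |].
  apply Rle_lt_trans with ((Rabs K + 1) * Rabs (x - z));
    [pose proof (RRle_abs K); pose proof (Rabs_pos (x - z)); nra |].
  replace eps with ((Rabs K + 1) * (eps / (Rabs K + 1))) by (field; lra).
  apply Rmult_lt_compat_l; lra.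
Qed.

Lemma ex_RInt_continuity_pt g a b : (forall z, continuity_pt g z) -> ex_RInt g a b.
Proof.
  intros H. apply (ex_RInt_continuous (V := R_CompleteNormedModule)).
  intros; apply continuity_pt_filterlim, H.
Qed.

Lemma RInt_abs_le h a b K :
  ex_RInt h a b -> (forall r, Rmin a b <= r <= Rmax a b -> Rabs (h r) <= K) ->
  Rabs (RInt h a b) <= K * Rabs (b - a).
Proof.
  intros Hi Hb. destruct (Rle_dec a b) as [Hab | Hab].
  - rewrite (Rabs_right (b - a)), Rmult_comm by lra.
    apply abs_RInt_le_const; auto.
    intros r Hr. apply Hb. rewrite Rmin_left, Rmax_right; lra.
  - rewrite <- (opp_RInt_swap (V := R_CompleteNormedModule)) by (apply ex_RInt_swap; auto).
    change (Rabs (- RInt h b a) <= K * Rabs (b - a)).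
    rewrite Rabs_Ropp, Rabs_minus_sym, (Rabs_right (a - b)), Rmult_comm by lra.
    apply abs_RInt_le_const; [lra | apply ex_RInt_swap; auto |].
    intros r Hr. apply Hb. rewrite Rmin_right, Rmax_left; lra.
Qed.

Lemma geometric_small C eps : 0 < eps -> exists n, C * (1 / 2) ^ n < eps.
Proof.
  intros He.
  assert (HC : 0 < Rabs C + 1) by (pose proof (Rabs_pos C); lra).
  destruct (pow_lt_1_zero (1 / 2) ltac:(rewrite Rabs_right; lra) (eps / (Rabs C + 1)))
    as [N HN]; [apply Rdiv_lt_0_compat; lra |].
  exists N. specialize (HN N (Nat.le_refl N)).
  pose proof (pow_le (1 / 2) N ltac:(lra)).
  rewrite Rabs_right in HN by lra.
  apply Rle_lt_trans with ((Rabs C + 1) * (1 / 2) ^ N); [pose proof (RRle_abs C); nra |].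
  replace eps with ((Rabs C + 1) * (eps / (Rabs C + 1))) by (field; lra).
  apply Rmult_lt_compat_l; lra.
Qed.

Lemma le_of_le_geometric a b C : (forall n, a <= b + C * (1 / 2) ^ n) -> a <= b.
Proof.
  intros H. apply Rle_plus_epsilon. intros eps He.
  destruct (geometric_small C eps He) as [n Hn]. specialize (H n). lra.
Qed.

Lemma Rabs_le_0 x : Rabs x <= 0 -> x = 0.
Proof. intros H. pose proof (Rabs_pos x). apply Rabs_eq_0. lra. Qed.

Lemma cauchy_geometric_limit (u : nat -> R) :
  (forall n m, (n <= m)%nat -> Rabs (u m - u n) <= 2 * (1 / 2) ^ n) ->
  exists l, forall n, Rabs (l - u n) <= 2 * (1 / 2) ^ n.
Proof.
  intros H.
  assert (Cc : Cauchy_crit u).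
  { intros eps He. destruct (geometric_small 4 eps He) as [N HN].
    exists N. intros n m Hn Hm. unfold R_dist.
    pose proof (H N n Hn). pose proof (H N m Hm).
    replace (u n - u m) with ((u n - u N) - (u m - u N)) by ring.
    eapply Rle_lt_trans; [apply Rabs_triang |]. rewrite Rabs_Ropp. lra. }
  destruct (Rcomplete.R_complete u Cc) as [l Hl].
  exists l. intros n. apply Rle_plus_epsilon. intros eps He.
  destruct (Hl eps He) as [N HN].
  specialize (HN (Nat.max n N) (Nat.le_max_r _ _)). unfold R_dist in HN.
  specialize (H n (Nat.max n N) (Nat.le_max_l _ _)).
  replace (l - u n) with ((u (Nat.max n N) - u n) - (u (Nat.max n N) - l)) by ring.
  eapply Rle_trans; [apply Rabs_triang |]. rewrite Rabs_Ropp. lra.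
Qed.

(* At the infimum of the set where [Q] holds, the local step pushes [Q] further down unless that
   infimum is [s1]. *)
Lemma real_induction_down (Q : R -> Prop) s1 t0 :
  s1 <= t0 -> Q t0 ->
  (forall m, s1 <= m <= t0 -> exists eta, 0 < eta /\
     forall x y, m - eta < y <= x -> x < m + eta -> x <= t0 -> Q x -> Q y) ->
  Q s1.
Proof.
  intros H1 Ht0 Hloc.
  set (E := fun x => s1 <= x <= t0 /\ Q x).
  destruct (completeness (fun x => E (- x))) as [M' [Hub Hlub]].
  { exists (- s1). intros x [Hx _]. lra. }
  { exists (- t0). unfold E. rewrite Ropp_involutive. split; [lra | auto]. }
  set (m := - M').
  assert (Hlow : forall x, E x -> m <= x).
  { intros x Ex. assert (T : E (- - x) -> - x <= M') by apply Hub.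
    rewrite Ropp_involutive in T. specialize (T Ex). unfold m. lra. }
  assert (Hglb : forall y, (forall x, E x -> y <= x) -> y <= m).
  { intros y Hy. assert (- y >= M'); [| unfold m; lra].
    apply Rle_ge, Hlub. intros x Ex. specialize (Hy _ Ex). lra. }
  assert (Hm : s1 <= m <= t0)
    by (split; [apply Hglb; intros x [Hx _]; lra | apply Hlow; split; auto; lra]).
  destruct (Hloc m Hm) as (eta & Heta & Hstep).
  destruct (classic (exists x, E x /\ x < m + eta)) as [[x [[Hx Qx] Hxm]] | Hno].
  2: { assert (m + eta <= m); [| lra]. apply Hglb. intros x Ex.
       apply Rnot_lt_le. intros Hlt. apply Hno. exists x. auto. }
  assert (Hmx : m <= x) by (apply Hlow; split; auto).
  set (y := Rmax s1 (m - eta / 2)).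
  assert (Qy : Q y).
  { apply (Hstep x y); auto; [unfold y, Rmax; destruct Rle_dec; lra | lra]. }
  unfold y, Rmax in Qy. destruct Rle_dec; auto.
  assert (m <= m - eta / 2) by (apply Hlow; split; auto; lra). lra.
Qed.

Lemma Rabs_between_le a b r : Rmin a b <= r <= Rmax a b -> Rabs (r - a) <= Rabs (b - a).
Proof. unfold Rmin, Rmax, Rabs. destruct Rle_dec; repeat destruct Rcase_abs; lra. Qed.

(** * Locally Lipschitz fields on [R^3] *)

Definition dist3 (p q : R * R * R) : R :=
  Rabs (cx p - cx q) + Rabs (cy p - cy q) + Rabs (cz p - cz q).

Definition in_box (B : R) (p : R * R * R) : Prop :=
  Rabs (cx p) <= B /\ Rabs (cy p) <= B /\ Rabs (cz p) <= B.

Definition is_coord (k : R * R * R -> R) : Prop := k = cx \/ k = cy \/ k = cz.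

Lemma triple_eq (p q : R * R * R) : cx p = cx q -> cy p = cy q -> cz p = cz q -> p = q.
Proof. destruct p as [[? ?] ?], q as [[? ?] ?]; unfold cx, cy, cz; simpl; intros; subst; auto. Qed.

Lemma dist3_ge0 p q : 0 <= dist3 p q.
Proof.
  unfold dist3. pose proof (Rabs_pos (cx p - cx q)). pose proof (Rabs_pos (cy p - cy q)).
  pose proof (Rabs_pos (cz p - cz q)). lra.
Qed.

Lemma dist3_triangle p q r : dist3 p r <= dist3 p q + dist3 q r.
Proof.
  unfold dist3.
  assert (T : forall a b c, Rabs (a - c) <= Rabs (a - b) + Rabs (b - c)).
  { intros a b c. replace (a - c) with ((a - b) + (b - c)) by ring. apply Rabs_triang. }
  pose proof (T (cx p) (cx q) (cx r)). pose proof (T (cy p) (cy q) (cy r)).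
  pose proof (T (cz p) (cz q) (cz r)). lra.
Qed.

Lemma dist3_diag p : dist3 p p = 0.
Proof. unfold dist3. rewrite !Rminus_diag, Rabs_R0. ring. Qed.

Lemma coord_le_dist3 k p q : is_coord k -> Rabs (k p - k q) <= dist3 p q.
Proof.
  unfold dist3. pose proof (Rabs_pos (cx p - cx q)). pose proof (Rabs_pos (cy p - cy q)).
  pose proof (Rabs_pos (cz p - cz q)). intros [-> | [-> | ->]]; lra.
Qed.

Lemma dist3_le_coords p q e :
  (forall k, is_coord k -> Rabs (k p - k q) <= e) -> dist3 p q <= 3 * e.
Proof.
  intros H. unfold dist3.
  pose proof (H cx (or_introl eq_refl)). pose proof (H cy (or_intror (or_introl eq_refl))).
  pose proof (H cz (or_intror (or_intror eq_refl))). lra.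
Qed.

Lemma coord_in_box k B p : is_coord k -> in_box B p -> Rabs (k p) <= B.
Proof. intros [-> | [-> | ->]] (? & ? & ?); auto. Qed.

Definition field_at (X : system) (s : R) (p : R * R * R) : R * R * R :=
  X s (cx p) (cy p) (cz p).

Definition locally_lipschitz (X : system) : Prop :=
  forall A B, exists L, 0 <= L /\ forall s p q, Rabs s <= A -> in_box B p -> in_box B q ->
    dist3 (field_at X s p) (field_at X s q) <= L * dist3 p q.

Definition locally_lipschitz_fun (f : R -> R * R * R -> R) : Prop :=
  forall A B, exists L M, 0 <= L /\ forall s p q, Rabs s <= A -> in_box B p -> in_box B q ->
    Rabs (f s p) <= M /\ Rabs (f s p - f s q) <= L * dist3 p q.

Lemma locally_lipschitz_fun_const c : locally_lipschitz_fun (fun _ _ => c).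
Proof.
  intros A B. exists 0, (Rabs c). split; [lra |]. intros s p q _ _ _.
  rewrite Rminus_diag, Rabs_R0, Rmult_0_l. split; lra.
Qed.

Lemma locally_lipschitz_fun_coord k : is_coord k -> locally_lipschitz_fun (fun _ p => k p).
Proof.
  intros Hk A B. exists 1, B. split; [lra |]. intros s p q _ Hp _.
  rewrite Rmult_1_l. split; [apply coord_in_box | apply coord_le_dist3]; auto.
Qed.

Lemma locally_lipschitz_fun_time h : continuity h -> locally_lipschitz_fun (fun s _ => h s).
Proof.
  intros Hh A B. destruct (continuous_bounded_on h (- A) A) as [M [_ HM]]; [intros; apply Hh |].
  exists 0, M. split; [lra |]. intros s p q Hs _ _.
  rewrite Rminus_diag, Rabs_R0, Rmult_0_l. split; [apply HM, Rabs_le_between | lra]; auto.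
Qed.

Lemma locally_lipschitz_fun_plus f g :
  locally_lipschitz_fun f -> locally_lipschitz_fun g ->
  locally_lipschitz_fun (fun s p => f s p + g s p).
Proof.
  intros Hf Hg A B.
  destruct (Hf A B) as (L1 & M1 & HL1 & H1), (Hg A B) as (L2 & M2 & HL2 & H2).
  exists (L1 + L2), (M1 + M2). split; [lra |]. intros s p q Hs Hp Hq.
  destruct (H1 s p q Hs Hp Hq), (H2 s p q Hs Hp Hq).
  split; [eapply Rle_trans; [apply Rabs_triang | lra] |].
  replace (f s p + g s p - (f s q + g s q)) with ((f s p - f s q) + (g s p - g s q)) by ring.
  eapply Rle_trans; [apply Rabs_triang | lra].
Qed.

Lemma locally_lipschitz_fun_opp f :
  locally_lipschitz_fun f -> locally_lipschitz_fun (fun s p => - f s p).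
Proof.
  intros Hf A B. destruct (Hf A B) as (L & M & HL & H).
  exists L, M. split; auto. intros s p q Hs Hp Hq.
  replace (- f s p - - f s q) with (- (f s p - f s q)) by ring.
  rewrite !Rabs_Ropp. auto.
Qed.

Lemma locally_lipschitz_fun_minus f g :
  locally_lipschitz_fun f -> locally_lipschitz_fun g ->
  locally_lipschitz_fun (fun s p => f s p - g s p).
Proof.
  intros Hf Hg.
  apply (locally_lipschitz_fun_plus f (fun s p => - g s p)), locally_lipschitz_fun_opp; auto.
Qed.

Lemma Rabs_mult_sub_le a a' b b' M1 M2 :
  Rabs a <= M1 -> Rabs b' <= M2 ->
  Rabs (a * b - a' * b') <= M1 * Rabs (b - b') + M2 * Rabs (a - a').
Proof.
  intros H1 H2.
  replace (a * b - a' * b') with (a * (b - b') + b' * (a - a')) by ring.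
  eapply Rle_trans; [apply Rabs_triang |]. rewrite !Rabs_mult.
  apply Rplus_le_compat; apply Rmult_le_compat_r; auto using Rabs_pos.
Qed.

Lemma locally_lipschitz_fun_mult f g :
  locally_lipschitz_fun f -> locally_lipschitz_fun g ->
  locally_lipschitz_fun (fun s p => f s p * g s p).
Proof.
  intros Hf Hg A B.
  destruct (Hf A B) as (L1 & M1 & HL1 & H1), (Hg A B) as (L2 & M2 & HL2 & H2).
  exists (Rabs M1 * L2 + Rabs M2 * L1), (M1 * M2).
  split; [pose proof (Rabs_pos M1); pose proof (Rabs_pos M2); nra |].
  intros s p q Hs Hp Hq.
  destruct (H1 s p q Hs Hp Hq) as [Hfp Hf'], (H2 s p q Hs Hp Hq) as [Hgp Hg'].
  destruct (H2 s q q Hs Hq Hq) as [Hgq _].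
  split; [rewrite Rabs_mult; apply Rmult_le_compat; auto using Rabs_pos |].
  eapply Rle_trans.
  { apply (Rabs_mult_sub_le _ _ _ _ (Rabs M1) (Rabs M2)); eapply Rle_trans; eauto using RRle_abs. }
  pose proof (Rabs_pos M1). pose proof (Rabs_pos M2).
  pose proof (Rmult_le_compat_l _ _ _ (Rabs_pos M1) Hg').
  pose proof (Rmult_le_compat_l _ _ _ (Rabs_pos M2) Hf'). lra.
Qed.

Lemma locally_lipschitz_fun_pow f n :
  locally_lipschitz_fun f -> locally_lipschitz_fun (fun s p => f s p ^ n).
Proof.
  intros Hf. induction n as [| n IH]; [exact (locally_lipschitz_fun_const 1) |].
  apply (locally_lipschitz_fun_mult f (fun s p => f s p ^ n)); auto.
Qed.

Ltac solve_locally_lipschitz :=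
  repeat first
    [ apply locally_lipschitz_fun_plus | apply locally_lipschitz_fun_minus
    | apply locally_lipschitz_fun_opp | apply locally_lipschitz_fun_mult
    | apply locally_lipschitz_fun_pow
    | apply (locally_lipschitz_fun_coord cx); now left
    | apply (locally_lipschitz_fun_coord cy); now right; left
    | apply (locally_lipschitz_fun_coord cz); now right; right
    | apply locally_lipschitz_fun_const | apply locally_lipschitz_fun_time; assumption ].

Lemma locally_lipschitz_of_coords X :
  (forall k, is_coord k -> locally_lipschitz_fun (fun s p => k (field_at X s p))) ->
  locally_lipschitz X.
Proof.
  intros H A B.
  destruct (H cx (or_introl eq_refl) A B) as (L1 & M1 & HL1 & H1).
  destruct (H cy (or_intror (or_introl eq_refl)) A B) as (L2 & M2 & HL2 & H2).
  destruct (H cz (or_intror (or_intror eq_refl)) A B) as (L3 & M3 & HL3 & H3).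
  exists (L1 + L2 + L3). split; [lra |]. intros s p q Hs Hp Hq.
  destruct (H1 s p q Hs Hp Hq) as [_ K1], (H2 s p q Hs Hp Hq) as [_ K2],
    (H3 s p q Hs Hp Hq) as [_ K3].
  unfold dist3 at 1. pose proof (dist3_ge0 p q). nra.
Qed.

Lemma langford_locally_lipschitz a b c d e : locally_lipschitz (langford a b c d e).
Proof.
  apply locally_lipschitz_of_coords.
  intros k [-> | [-> | ->]]; unfold field_at, langford, cx, cy, cz; simpl; solve_locally_lipschitz.
Qed.

(** * Uniqueness of solutions *)

Lemma in_box_le B B' p : in_box B p -> B <= B' -> in_box B' p.
Proof. intros (? & ? & ?) ?. repeat split; lra. Qed.

Lemma solution_bounded X lo hi u v w a b :
  is_solution X lo hi u v w -> lo < a -> b < hi ->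
  exists B, forall r, a <= r <= b -> in_box B (u r, v r, w r).
Proof.
  intros S Ha Hb.
  assert (Bd : forall k, (forall r, lo < r < hi -> exists l, derivable_pt_lim k r l) ->
                 exists B, 0 <= B /\ forall r, a <= r <= b -> Rabs (k r) <= B).
  { intros k Hk. apply continuous_bounded_on. intros r Hr.
    destruct (Hk r) as [l Hl]; [lra |]. apply derivable_continuous_pt. exists l. exact Hl. }
  destruct (Bd u) as (Bu & ? & Hu); [intros r Hr; destruct (S r Hr) as [? _]; eauto |].
  destruct (Bd v) as (Bv & ? & Hv); [intros r Hr; destruct (S r Hr) as (_ & ? & _); eauto |].
  destruct (Bd w) as (Bw & ? & Hw); [intros r Hr; destruct (S r Hr) as (_ & _ & ?); eauto |].
  exists (Bu + Bv + Bw). intros r Hr.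
  pose proof (Hu r Hr). pose proof (Hv r Hr). pose proof (Hw r Hr).
  unfold in_box, cx, cy, cz; simpl. repeat split; lra.
Qed.

Lemma derivable_pt_lim_sq_diff f g r a b :
  derivable_pt_lim f r a -> derivable_pt_lim g r b ->
  derivable_pt_lim (fun r => (f r - g r) * (f r - g r)) r (2 * (f r - g r) * (a - b)).
Proof.
  intros Hf Hg. pose proof (derivable_pt_lim_minus f g r a b Hf Hg) as H.
  replace (2 * (f r - g r) * (a - b)) with ((a - b) * (f r - g r) + (f r - g r) * (a - b)) by ring.
  exact (derivable_pt_lim_mult (fun r => f r - g r) (fun r => f r - g r) r _ _ H H).
Qed.

Lemma sum_sq_deriv_bound a1 a2 a3 p1 p2 p3 L :
  0 <= L -> Rabs p1 + Rabs p2 + Rabs p3 <= L * (Rabs a1 + Rabs a2 + Rabs a3) ->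
  Rabs (2 * a1 * p1 + 2 * a2 * p2 + 2 * a3 * p3) <= 6 * L * (a1 * a1 + a2 * a2 + a3 * a3).
Proof.
  intros HL Hp.
  assert (Tri : Rabs (2 * a1 * p1 + 2 * a2 * p2 + 2 * a3 * p3)
                <= 2 * (Rabs a1 * Rabs p1 + Rabs a2 * Rabs p2 + Rabs a3 * Rabs p3)).
  { eapply Rle_trans; [apply Rabs_triang |].
    eapply Rle_trans; [apply Rplus_le_compat_r, Rabs_triang |].
    rewrite !Rabs_mult, (Rabs_right 2) by lra. lra. }
  assert (Sq : forall x, x * x = Rabs x * Rabs x).
  { intros x. rewrite <- Rabs_mult. symmetry. apply Rabs_right, Rle_ge, Rle_0_sqr. }
  rewrite (Sq a1), (Sq a2), (Sq a3).
  pose proof (Rabs_pos a1). pose proof (Rabs_pos a2). pose proof (Rabs_pos a3).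
  pose proof (Rabs_pos p1). pose proof (Rabs_pos p2). pose proof (Rabs_pos p3).
  assert (Cs : Rabs a1 * Rabs p1 + Rabs a2 * Rabs p2 + Rabs a3 * Rabs p3
          <= L * ((Rabs a1 + Rabs a2 + Rabs a3) * (Rabs a1 + Rabs a2 + Rabs a3))) by nra.
  assert (Qm : (Rabs a1 + Rabs a2 + Rabs a3) * (Rabs a1 + Rabs a2 + Rabs a3)
          <= 3 * (Rabs a1 * Rabs a1 + Rabs a2 * Rabs a2 + Rabs a3 * Rabs a3)).
  { pose proof (Rle_0_sqr (Rabs a1 - Rabs a2)). pose proof (Rle_0_sqr (Rabs a2 - Rabs a3)).
    pose proof (Rle_0_sqr (Rabs a1 - Rabs a3)). unfold Rsqr in *. lra. }
  pose proof (Rmult_le_compat_l L _ _ HL Qm). lra.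
Qed.

Lemma solution_unique X lo hi u1 v1 w1 u2 v2 w2 s0 s :
  locally_lipschitz X -> is_solution X lo hi u1 v1 w1 -> is_solution X lo hi u2 v2 w2 ->
  lo < s0 < hi -> lo < s < hi -> u1 s0 = u2 s0 -> v1 s0 = v2 s0 -> w1 s0 = w2 s0 ->
  u1 s = u2 s /\ v1 s = v2 s /\ w1 s = w2 s.
Proof.
  intros HX S1 S2 Hs0 Hs E1 E2 E3.
  set (a := Rmin s0 s). set (b := Rmax s0 s).
  assert (Hab : lo < a /\ b < hi /\ a <= s0 <= b /\ a <= s <= b).
  { unfold a, b, Rmin, Rmax. destruct Rle_dec; lra. }
  destruct (solution_bounded X lo hi u1 v1 w1 a b S1) as [B1 HB1]; [lra | lra |].
  destruct (solution_bounded X lo hi u2 v2 w2 a b S2) as [B2 HB2]; [lra | lra |].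
  destruct (HX (Rabs a + Rabs b) (Rmax B1 B2)) as (L & HL & HLip).
  set (D := fun r => (u1 r - u2 r) * (u1 r - u2 r) + (v1 r - v2 r) * (v1 r - v2 r)
                     + (w1 r - w2 r) * (w1 r - w2 r)).
  set (D' := fun r =>
    2 * (u1 r - u2 r) * (cx (X r (u1 r) (v1 r) (w1 r)) - cx (X r (u2 r) (v2 r) (w2 r)))
    + 2 * (v1 r - v2 r) * (cy (X r (u1 r) (v1 r) (w1 r)) - cy (X r (u2 r) (v2 r) (w2 r)))
    + 2 * (w1 r - w2 r) * (cz (X r (u1 r) (v1 r) (w1 r)) - cz (X r (u2 r) (v2 r) (w2 r)))).
  assert (HD : D s = 0).
  { apply (gronwall_zero D D' (6 * L) a b s0 s); try lra.
    - intros r Hr. destruct (S1 r) as (? & ? & ?), (S2 r) as (? & ? & ?); try lra.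
      unfold D, D'. repeat apply derivable_pt_lim_plus; apply derivable_pt_lim_sq_diff; auto.
    - intros r Hr. split; [unfold D; pose proof (Rle_0_sqr (u1 r - u2 r));
        pose proof (Rle_0_sqr (v1 r - v2 r)); pose proof (Rle_0_sqr (w1 r - w2 r));
        unfold Rsqr in *; lra |].
      apply sum_sq_deriv_bound; auto.
      apply (HLip r (u1 r, v1 r, w1 r) (u2 r, v2 r, w2 r)).
      + apply Rabs_le_between. pose proof (Rle_abs a). pose proof (Rle_abs b).
        pose proof (Rle_abs (- a)). pose proof (Rle_abs (- b)). rewrite Rabs_Ropp in *. lra.
      + apply (in_box_le B1); [apply HB1; lra | apply Rmax_l].
      + apply (in_box_le B2); [apply HB2; lra | apply Rmax_r].
    - unfold D. rewrite E1, E2, E3. ring. }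
  unfold D in HD.
  pose proof (Rle_0_sqr (u1 s - u2 s)). pose proof (Rle_0_sqr (v1 s - v2 s)).
  pose proof (Rle_0_sqr (w1 s - w2 s)).
  unfold Rsqr in *. repeat split; apply Rminus_diag_uniq, Rsqr_0_uniq; unfold Rsqr; lra.
Qed.

(** * Local existence by Picard iteration *)

Definition picard_step (G : R * R * R -> R * R * R) (p0 : R * R * R) (xi : R)
  (f : R -> R * R * R) (s : R) : R * R * R :=
  (cx p0 + RInt (fun r => cx (G (f r))) xi s,
   cy p0 + RInt (fun r => cy (G (f r))) xi s,
   cz p0 + RInt (fun r => cz (G (f r))) xi s).

Lemma picard_step_coord G p0 xi f s k : is_coord k ->
  k (picard_step G p0 xi f s) = k p0 + RInt (fun r => k (G (f r))) xi s.
Proof. intros [-> | [-> | ->]]; reflexivity. Qed.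

Definition picard_iter G p0 xi (n : nat) : R -> R * R * R :=
  Nat.iter n (picard_step G p0 xi) (fun _ => p0).

Section Picard.

Variables (G : R * R * R -> R * R * R) (L M : R) (p0 : R * R * R) (xi : R).
Hypotheses (HL : 0 <= L) (HM : 0 <= M)
  (G_lipschitz : forall p q, dist3 (G p) (G q) <= L * dist3 p q)
  (G_bounded : forall k p, is_coord k -> Rabs (k (G p)) <= M).

Let P := picard_iter G p0 xi.
(* On [[xi - d, xi + d]] consecutive iterates get closer by a factor [1/2]. *)
Let d := 1 / (6 * (L + M + 1)).

Lemma picard_radius : 0 < d /\ 6 * L * d <= 1 /\ 6 * M * d <= 1.
Proof.
  assert (E : d * (6 * (L + M + 1)) = 1) by (unfold d; field; lra).
  assert (0 < d) by (unfold d; apply Rdiv_lt_0_compat; lra).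
  repeat split; nra.
Qed.

Lemma G_comp_continuity_pt f K k :
  is_coord k -> (forall k s s', is_coord k -> Rabs (k (f s) - k (f s')) <= K * Rabs (s - s')) ->
  forall z, continuity_pt (fun r => k (G (f r))) z.
Proof.
  intros Hk Hf. apply (lipschitz_continuity_pt _ (L * (3 * K))). intros s s'.
  eapply Rle_trans; [apply coord_le_dist3, Hk |].
  eapply Rle_trans; [apply G_lipschitz |]. rewrite Rmult_assoc.
  apply Rmult_le_compat_l; auto. rewrite Rmult_assoc.
  apply dist3_le_coords. auto.
Qed.

Lemma picard_iter_lipschitz n k s s' : is_coord k ->
  Rabs (k (P n s) - k (P n s')) <= M * Rabs (s - s').
Proof.
  revert k s s'. induction n as [| n IH]; intros k s s' Hk.
  - simpl. rewrite Rminus_diag, Rabs_R0. pose proof (Rabs_pos (s - s')). nra.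
  - simpl. rewrite !picard_step_coord by exact Hk.
    assert (Hi : forall a b, ex_RInt (fun r => k (G (P n r))) a b).
    { intros a b. apply ex_RInt_continuity_pt, (G_comp_continuity_pt _ M); auto. }
    pose proof (RInt_Chasles (V := R_CompleteNormedModule) _ xi s' s (Hi _ _) (Hi _ _)) as Ch.
    change (RInt (fun r => k (G (P n r))) xi s' + RInt (fun r => k (G (P n r))) s' s
            = RInt (fun r => k (G (P n r))) xi s) in Ch.
    replace (k p0 + RInt (fun r => k (G (P n r))) xi s
             - (k p0 + RInt (fun r => k (G (P n r))) xi s'))
      with (RInt (fun r => k (G (P n r))) s' s) by lra.
    apply RInt_abs_le; auto.
Qed.

Lemma picard_iter_continuity_pt n k z :
  is_coord k -> continuity_pt (fun r => k (G (P n r))) z.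
Proof. intros Hk. apply (G_comp_continuity_pt _ M); auto using picard_iter_lipschitz. Qed.

Lemma picard_iter_contract n s :
  Rabs (s - xi) <= d -> dist3 (P (S n) s) (P n s) <= (1 / 2) ^ n.
Proof.
  destruct picard_radius as (Hd & HLd & HMd). revert s.
  induction n as [| n IH]; intros s Hs.
  - apply Rle_trans with (3 * (M * d)); [| simpl; lra].
    apply dist3_le_coords. intros k Hk.
    change (P 1%nat s) with (picard_step G p0 xi (P 0%nat) s).
    rewrite picard_step_coord by exact Hk. change (P 0%nat s) with p0.
    rewrite Rplus_minus_l.
    eapply Rle_trans; [apply RInt_abs_le |].
    + apply ex_RInt_continuity_pt. intros; apply picard_iter_continuity_pt; auto.
    + intros; apply G_bounded; auto.
    + apply Rmult_le_compat_l; auto.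
  - apply Rle_trans with (3 * ((L * (1 / 2) ^ n) * d)).
    2: { simpl. pose proof (pow_le (1 / 2) n ltac:(lra)). nra. }
    apply dist3_le_coords. intros k Hk.
    change (P (S (S n)) s) with (picard_step G p0 xi (P (S n)) s).
    change (P (S n) s) with (picard_step G p0 xi (P n) s).
    rewrite !picard_step_coord by exact Hk.
    assert (Hi : forall m, ex_RInt (fun r => k (G (P m r))) xi s).
    { intros m. apply ex_RInt_continuity_pt. intros; apply picard_iter_continuity_pt; auto. }
    pose proof (RInt_minus (V := R_CompleteNormedModule) _ _ xi s (Hi (S n)) (Hi n)) as Hm.
    change (RInt (fun r => k (G (P (S n) r)) - k (G (P n r))) xi s
            = RInt (fun r => k (G (P (S n) r))) xi s - RInt (fun r => k (G (P n r))) xi s) in Hm.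
    replace (k p0 + RInt (fun r => k (G (P (S n) r))) xi s
             - (k p0 + RInt (fun r => k (G (P n r))) xi s))
      with (RInt (fun r => k (G (P (S n) r)) - k (G (P n r))) xi s) by lra.
    eapply Rle_trans; [apply RInt_abs_le |].
    + apply ex_RInt_continuity_pt. intros z.
      apply continuity_pt_minus; apply picard_iter_continuity_pt; auto.
    + intros r Hr. eapply Rle_trans; [apply coord_le_dist3, Hk |].
      eapply Rle_trans; [apply G_lipschitz |]. apply Rmult_le_compat_l; auto.
      apply IH. pose proof (Rabs_between_le xi s r Hr). lra.
    + apply Rmult_le_compat_l; [pose proof (pow_le (1 / 2) n ltac:(lra)); nra | lra].
Qed.

Lemma picard_iter_cauchy n m s : (n <= m)%nat -> Rabs (s - xi) <= d ->
  dist3 (P m s) (P n s) <= 2 * (1 / 2) ^ n - 2 * (1 / 2) ^ m.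
Proof.
  intros Hnm Hs. induction Hnm as [| m Hnm IH].
  - rewrite dist3_diag. lra.
  - eapply Rle_trans; [apply (dist3_triangle _ (P m s)) |].
    pose proof (picard_iter_contract m s Hs).
    change ((1 / 2) ^ S m) with (1 / 2 * (1 / 2) ^ m). lra.
Qed.

Let clip (s : R) : R := clamp (xi - d) (xi + d) s.

Lemma clip_near s : Rabs (clip s - xi) <= d.
Proof.
  destruct picard_radius as (Hd & _ & _). apply Rabs_le_between.
  pose proof (clamp_between (xi - d) (xi + d) s). unfold clip. lra.
Qed.

Lemma clip_id s : Rabs (s - xi) <= d -> clip s = s.
Proof. intros Hs. apply clamp_id. apply Rabs_le_between in Hs. lra. Qed.

(* Sampling the iterates at the clipped time keeps the limit Lipschitz on all of [R]. *)
Lemma picard_limit_exists :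
  exists f, forall s n k, is_coord k -> Rabs (k (f s) - k (P n (clip s))) <= 2 * (1 / 2) ^ n.
Proof.
  apply (choice (fun s l =>
    forall n k, is_coord k -> Rabs (k l - k (P n (clip s))) <= 2 * (1 / 2) ^ n)).
  intros s.
  assert (Hk : forall k, is_coord k ->
                 exists l, forall n, Rabs (l - k (P n (clip s))) <= 2 * (1 / 2) ^ n).
  { intros k Hk. apply cauchy_geometric_limit. intros n m Hnm.
    eapply Rle_trans; [apply coord_le_dist3, Hk |].
    eapply Rle_trans; [apply picard_iter_cauchy; auto using clip_near |].
    pose proof (pow_le (1 / 2) m ltac:(lra)). lra. }
  destruct (Hk cx) as [lx Hx]; [now left |].
  destruct (Hk cy) as [ly Hy]; [now right; left |].
  destruct (Hk cz) as [lz Hz]; [now right; right |].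
  exists (lx, ly, lz). intros n k [-> | [-> | ->]]; auto.
Qed.

Section Limit.

Variable f : R -> R * R * R.
Hypothesis f_limit :
  forall s n k, is_coord k -> Rabs (k (f s) - k (P n (clip s))) <= 2 * (1 / 2) ^ n.

Lemma picard_limit_lipschitz k s s' :
  is_coord k -> Rabs (k (f s) - k (f s')) <= M * Rabs (s - s').
Proof.
  intros Hk. apply (le_of_le_geometric _ _ 4). intros n.
  pose proof (f_limit s n k Hk). pose proof (f_limit s' n k Hk).
  pose proof (picard_iter_lipschitz n k (clip s) (clip s') Hk).
  assert (M * Rabs (clip s - clip s') <= M * Rabs (s - s')).
  { apply Rmult_le_compat_l; auto. apply clamp_lipschitz. destruct picard_radius; lra. }
  replace (k (f s) - k (f s')) with ((k (f s) - k (P n (clip s)))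
    + (k (P n (clip s)) - k (P n (clip s'))) - (k (f s') - k (P n (clip s')))) by ring.
  eapply Rle_trans; [apply Rabs_triang |]. rewrite Rabs_Ropp.
  eapply Rle_trans; [apply Rplus_le_compat_r, Rabs_triang |]. lra.
Qed.

Lemma picard_limit_continuity_pt k z : is_coord k -> continuity_pt (fun r => k (G (f r))) z.
Proof. intros Hk. apply (G_comp_continuity_pt _ M); auto using picard_limit_lipschitz. Qed.

Lemma picard_limit_close n r : Rabs (r - xi) <= d -> dist3 (P n r) (f r) <= 6 * (1 / 2) ^ n.
Proof.
  intros Hr. replace (6 * (1 / 2) ^ n) with (3 * (2 * (1 / 2) ^ n)) by ring.
  apply dist3_le_coords. intros k Hk. rewrite Rabs_minus_sym.
  pose proof (f_limit r n k Hk) as H. rewrite clip_id in H; auto.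
Qed.

Lemma picard_limit_integral s k : Rabs (s - xi) <= d -> is_coord k ->
  k (f s) = k p0 + RInt (fun r => k (G (f r))) xi s.
Proof.
  intros Hs Hk. destruct picard_radius as (Hd & HLd & _).
  apply Rminus_diag_uniq, Rabs_le_0, (le_of_le_geometric _ 0 2). intros n.
  assert (Hi : forall g, (forall z, continuity_pt g z) -> ex_RInt g xi s)
    by (intros; apply ex_RInt_continuity_pt; auto).
  assert (Hstep : k (P (S n) s) = k p0 + RInt (fun r => k (G (P n r))) xi s)
    by exact (picard_step_coord G p0 xi (P n) s k Hk).
  pose proof (RInt_minus (V := R_CompleteNormedModule) (fun r => k (G (P n r)))
    (fun r => k (G (f r))) xi s (Hi _ (fun z => picard_iter_continuity_pt n k z Hk))
    (Hi _ (fun z => picard_limit_continuity_pt k z Hk))) as Hm.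
  change (RInt (fun r => k (G (P n r)) - k (G (f r))) xi s
          = RInt (fun r => k (G (P n r))) xi s - RInt (fun r => k (G (f r))) xi s) in Hm.
  replace (k (f s) - (k p0 + RInt (fun r => k (G (f r))) xi s))
    with ((k (f s) - k (P (S n) s)) + RInt (fun r => k (G (P n r)) - k (G (f r))) xi s) by lra.
  eapply Rle_trans; [apply Rabs_triang |].
  assert (Hf : Rabs (k (f s) - k (P (S n) s)) <= (1 / 2) ^ n).
  { pose proof (f_limit s (S n) k Hk) as H. rewrite clip_id in H by exact Hs.
    change ((1 / 2) ^ S n) with (1 / 2 * (1 / 2) ^ n) in H. lra. }
  assert (HI : Rabs (RInt (fun r => k (G (P n r)) - k (G (f r))) xi s)
               <= (L * (6 * (1 / 2) ^ n)) * Rabs (s - xi)).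
  { apply RInt_abs_le.
    - apply Hi. intros z. apply continuity_pt_minus;
        [apply picard_iter_continuity_pt | apply picard_limit_continuity_pt]; auto.
    - intros r Hr. eapply Rle_trans; [apply coord_le_dist3, Hk |].
      eapply Rle_trans; [apply G_lipschitz |]. apply Rmult_le_compat_l; auto.
      apply picard_limit_close. pose proof (Rabs_between_le xi s r Hr). lra. }
  assert (L * (6 * (1 / 2) ^ n) * Rabs (s - xi) <= (1 / 2) ^ n).
  { pose proof (pow_le (1 / 2) n ltac:(lra)).
    apply Rle_trans with ((6 * L * d) * (1 / 2) ^ n); [| nra].
    replace (6 * L * d * (1 / 2) ^ n) with ((L * (6 * (1 / 2) ^ n)) * d) by ring.
    apply Rmult_le_compat_l; [nra | lra]. }
  lra.
Qed.

Lemma picard_limit_at_xi : f xi = p0.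
Proof.
  destruct picard_radius as (Hd & _ & _).
  assert (E : forall k, is_coord k -> k (f xi) = k p0).
  { intros k Hk.
    rewrite picard_limit_integral, RInt_point by (rewrite ?Rminus_diag, ?Rabs_R0; auto; lra).
    apply Rplus_0_r. }
  apply triple_eq; apply E; [now left | now right; left | now right; right].
Qed.

Lemma picard_limit_derivable s k : xi - d < s < xi + d -> is_coord k ->
  derivable_pt_lim (fun r => k (f r)) s (k (G (f s))).
Proof.
  intros Hs Hk.
  apply (derivable_pt_lim_locally_eq (fun r => k p0 + RInt (fun r => k (G (f r))) xi r) _ _ _
           (xi - d) (xi + d)); auto.
  - intros y Hy. apply picard_limit_integral; auto. apply Rabs_le_between. lra.
  - rewrite <- (Rplus_0_l (k (G (f s)))).
    apply derivable_pt_lim_plus; [apply derivable_pt_lim_const |].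
    apply derivable_pt_lim_RInt_continuous. intros z. apply picard_limit_continuity_pt; auto.
Qed.

End Limit.

Theorem picard_existence :
  exists f, f xi = p0 /\ (forall s, dist3 (f s) p0 <= 3 * M * Rabs (s - xi)) /\
    forall s k, xi - d < s < xi + d -> is_coord k ->
      derivable_pt_lim (fun r => k (f r)) s (k (G (f s))).
Proof.
  destruct picard_limit_exists as [f Hf].
  exists f. split; [| split].
  - exact (picard_limit_at_xi f Hf).
  - intros s. rewrite <- (picard_limit_at_xi f Hf), Rmult_assoc.
    apply dist3_le_coords. intros k Hk. exact (picard_limit_lipschitz f Hf k s xi Hk).
  - exact (picard_limit_derivable f Hf).
Qed.

End Picard.

Definition autonomous (F : R -> R -> R -> R * R * R) : system := fun _ x y z => F x y z.

Definition clamp3 (p0 q : R * R * R) : R * R * R :=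
  (clamp (cx p0 - 1) (cx p0 + 1) (cx q), clamp (cy p0 - 1) (cy p0 + 1) (cy q),
   clamp (cz p0 - 1) (cz p0 + 1) (cz q)).

Lemma clamp3_coord p0 q k : is_coord k -> k (clamp3 p0 q) = clamp (k p0 - 1) (k p0 + 1) (k q).
Proof. intros [-> | [-> | ->]]; reflexivity. Qed.

Lemma clamp3_near p0 q k : is_coord k -> Rabs (k (clamp3 p0 q) - k p0) <= 1.
Proof.
  intros Hk. rewrite clamp3_coord by exact Hk. apply Rabs_le_between.
  pose proof (clamp_between (k p0 - 1) (k p0 + 1) (k q)). lra.
Qed.

Lemma clamp3_lipschitz p0 q q' : dist3 (clamp3 p0 q) (clamp3 p0 q') <= dist3 q q'.
Proof.
  pose proof (clamp_lipschitz (cx p0 - 1) (cx p0 + 1) (cx q) (cx q') ltac:(lra)).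
  pose proof (clamp_lipschitz (cy p0 - 1) (cy p0 + 1) (cy q) (cy q') ltac:(lra)).
  pose proof (clamp_lipschitz (cz p0 - 1) (cz p0 + 1) (cz q) (cz q') ltac:(lra)).
  unfold dist3, clamp3, cx, cy, cz in *; simpl. lra.
Qed.

Lemma clamp3_id p0 q : dist3 q p0 <= 1 -> clamp3 p0 q = q.
Proof.
  intros H. assert (E : forall k, is_coord k -> k (clamp3 p0 q) = k q).
  { intros k Hk. rewrite clamp3_coord by exact Hk. apply clamp_id.
    pose proof (coord_le_dist3 k q p0 Hk) as Hq. apply Rabs_le_between in Hq. lra. }
  apply triple_eq; apply E; [now left | now right; left | now right; right].
Qed.

Lemma coord_origin k : is_coord k -> k (0, 0, 0) = 0.
Proof. intros [-> | [-> | ->]]; reflexivity. Qed.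

Lemma clamp3_in_box p0 q : in_box (dist3 p0 (0, 0, 0) + 1) (clamp3 p0 q).
Proof.
  assert (H : forall k, is_coord k -> Rabs (k (clamp3 p0 q)) <= dist3 p0 (0, 0, 0) + 1).
  { intros k Hk. pose proof (clamp3_near p0 q k Hk) as Hn.
    pose proof (coord_le_dist3 k p0 (0, 0, 0) Hk) as Hp.
    rewrite coord_origin, Rminus_0_r in Hp by exact Hk.
    replace (k (clamp3 p0 q)) with ((k (clamp3 p0 q) - k p0) + k p0) by ring.
    eapply Rle_trans; [apply Rabs_triang | lra]. }
  repeat split; apply H; [now left | now right; left | now right; right].
Qed.

(* Frozen outside the unit box around [p0], the field becomes globally Lipschitz and bounded. *)
Definition frozen (F : R -> R -> R -> R * R * R) (p0 q : R * R * R) : R * R * R :=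
  field_at (autonomous F) 0 (clamp3 p0 q).

Lemma frozen_lipschitz_bounded F p0 : locally_lipschitz (autonomous F) ->
  exists L M, 0 <= L /\ 0 <= M /\
    (forall q q', dist3 (frozen F p0 q) (frozen F p0 q') <= L * dist3 q q') /\
    (forall k q, is_coord k -> Rabs (k (frozen F p0 q)) <= M).
Proof.
  intros HF. destruct (HF 0 (dist3 p0 (0, 0, 0) + 1)) as (L & HL & HLip).
  assert (GL : forall q q', dist3 (frozen F p0 q) (frozen F p0 q')
                            <= L * dist3 (clamp3 p0 q) (clamp3 p0 q')).
  { intros q q'. apply HLip; [rewrite Rabs_R0; lra | apply clamp3_in_box | apply clamp3_in_box]. }
  assert (Gp0 : clamp3 p0 p0 = p0) by (apply clamp3_id; rewrite dist3_diag; lra).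
  exists L, (dist3 (frozen F p0 p0) (0, 0, 0) + 3 * L).
  split; [auto | split; [pose proof (dist3_ge0 (frozen F p0 p0) (0, 0, 0)); lra | split]].
  - intros q q'. eapply Rle_trans; [apply GL |].
    apply Rmult_le_compat_l; auto. apply clamp3_lipschitz.
  - intros k q Hk.
    assert (Hq : dist3 (frozen F p0 q) (frozen F p0 p0) <= 3 * L).
    { eapply Rle_trans; [apply GL |]. rewrite Gp0, Rmult_comm.
      apply Rmult_le_compat_r; auto. rewrite <- (Rmult_1_r 3).
      apply dist3_le_coords. intros k' Hk'. apply clamp3_near; auto. }
    pose proof (dist3_triangle (frozen F p0 q) (frozen F p0 p0) (0, 0, 0)).
    pose proof (coord_le_dist3 k (frozen F p0 q) (0, 0, 0) Hk) as Hk0.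
    rewrite coord_origin, Rminus_0_r in Hk0 by exact Hk. lra.
Qed.

Theorem local_existence F : locally_lipschitz (autonomous F) ->
  forall xi x0 y0 z0, exists dl, 0 < dl /\ exists u v w,
    is_solution (autonomous F) (xi - dl) (xi + dl) u v w /\ u xi = x0 /\ v xi = y0 /\ w xi = z0.
Proof.
  intros HF xi x0 y0 z0. set (p0 := (x0, y0, z0)).
  destruct (frozen_lipschitz_bounded F p0 HF) as (L & M & HL & HM & GL & GM).
  destruct (picard_existence (frozen F p0) L M p0 xi HL HM GL GM) as (f & Hf0 & Hfnear & Hfd).
  set (dl := 1 / (6 * (L + M + 1))) in *.
  assert (Hdl : 0 < dl /\ 3 * M * dl <= 1).
  { assert (E : dl * (6 * (L + M + 1)) = 1) by (unfold dl; field; lra).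
    assert (0 < dl) by (unfold dl; apply Rdiv_lt_0_compat; lra). split; nra. }
  exists dl. split; [tauto |].
  exists (fun r => cx (f r)), (fun r => cy (f r)), (fun r => cz (f r)).
  split; [| rewrite Hf0; repeat split].
  intros s Hs.
  (* The solution stays in the box where [frozen F p0] coincides with [F]. *)
  assert (Hnear : dist3 (f s) p0 <= 1).
  { eapply Rle_trans; [apply Hfnear |].
    apply Rle_trans with (3 * M * dl); [| tauto].
    apply Rmult_le_compat_l; [lra |]. apply Rabs_le_between. lra. }
  assert (EG : frozen F p0 (f s) = F (cx (f s)) (cy (f s)) (cz (f s))).
  { unfold frozen. rewrite clamp3_id by exact Hnear. reflexivity. }
  unfold autonomous at 1 2 3. rewrite <- EG.
  repeat split; apply Hfd; auto; [now left | now right; left | now right; right].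
Qed.

(** * Time change by an odd perturbation of the clock *)

Definition scale3 (c : R) (p : R * R * R) : R * R * R := (c * cx p, c * cy p, c * cz p).

Definition scaled (C : R -> R) (F : R -> R -> R -> R * R * R) : system :=
  fun s x y z => scale3 (C s) (F x y z).

Lemma dist3_scale3 c p q : dist3 (scale3 c p) (scale3 c q) = Rabs c * dist3 p q.
Proof.
  unfold dist3, scale3, cx, cy, cz; simpl. rewrite <- !Rmult_minus_distr_l, !Rabs_mult. ring.
Qed.

Lemma scaled_locally_lipschitz C F :
  continuity C -> locally_lipschitz (autonomous F) -> locally_lipschitz (scaled C F).
Proof.
  intros HC HF A B. destruct (HF A B) as (L & HL & HLip).
  destruct (continuous_bounded_on C (- A) A) as (K & HK & HCK); [intros; apply HC |].
  exists (K * L). split; [nra |]. intros s p q Hs Hp Hq.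
  unfold field_at, scaled. rewrite dist3_scale3, Rmult_assoc.
  apply Rmult_le_compat; auto using Rabs_pos, dist3_ge0.
  - apply HCK, Rabs_le_between, Hs.
  - apply (HLip s); auto.
Qed.

Lemma solution_restrict X lo hi lo' hi' u v w :
  is_solution X lo hi u v w -> lo <= lo' -> hi' <= hi -> is_solution X lo' hi' u v w.
Proof. intros H H1 H2 s Hs. apply H. lra. Qed.

Lemma solution_comp F C sig lo hi a b W1 W2 W3 :
  is_solution (autonomous F) a b W1 W2 W3 ->
  (forall r, lo < r < hi -> derivable_pt_lim sig r (C r) /\ a < sig r < b) ->
  is_solution (scaled C F) lo hi
    (fun r => W1 (sig r)) (fun r => W2 (sig r)) (fun r => W3 (sig r)).
Proof.
  intros HW Hsig r Hr. destruct (Hsig r Hr) as [Hd Hin].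
  destruct (HW (sig r) Hin) as (D1 & D2 & D3).
  unfold scaled, scale3, autonomous, cx, cy, cz in *; simpl in *.
  repeat split; rewrite Rmult_comm; apply (derivable_pt_lim_comp sig); auto.
Qed.

Lemma solution_agree X a b a' b' W1 W2 W3 V1 V2 V3 t0 :
  locally_lipschitz X -> is_solution X a b W1 W2 W3 -> is_solution X a' b' V1 V2 V3 ->
  a < t0 < b -> a' < t0 < b' -> W1 t0 = V1 t0 -> W2 t0 = V2 t0 -> W3 t0 = V3 t0 ->
  forall t, a < t < b -> a' < t < b' -> W1 t = V1 t /\ W2 t = V2 t /\ W3 t = V3 t.
Proof.
  intros HX SW SV H0 H0' E1 E2 E3 t Ht Ht'.
  apply (solution_unique X (Rmax a a') (Rmin b b') _ _ _ _ _ _ t0 t HX); auto;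
    try (eapply solution_restrict; eauto using Rmax_l, Rmax_r, Rmin_l, Rmin_r);
    unfold Rmax, Rmin; repeat destruct Rle_dec; lra.
Qed.

Definition glue (a b : R) (W V : R -> R) (t : R) : R :=
  if Rlt_dec a t then if Rlt_dec t b then W t else V t else V t.

Lemma glue_in a b W V t : a < t < b -> glue a b W V t = W t.
Proof. intros H. unfold glue. destruct Rlt_dec; [destruct Rlt_dec |]; auto; lra. Qed.

Lemma glue_out a b W V t : (a < t < b -> W t = V t) -> glue a b W V t = V t.
Proof. intros H. unfold glue. destruct Rlt_dec; [destruct Rlt_dec |]; auto. Qed.

Lemma solution_glue X a b a' b' W1 W2 W3 V1 V2 V3 :
  is_solution X a b W1 W2 W3 -> is_solution X a' b' V1 V2 V3 ->
  (forall t, a < t < b -> a' < t < b' -> W1 t = V1 t /\ W2 t = V2 t /\ W3 t = V3 t) ->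
  (exists t0, a < t0 < b /\ a' < t0 < b') ->
  is_solution X (Rmin a a') (Rmax b b') (glue a b W1 V1) (glue a b W2 V2) (glue a b W3 V3).
Proof.
  intros SW SV Agree [t0 [H0 H0']] t Ht.
  assert (Hc : a < t < b \/ a' < t < b')
    by (revert Ht; unfold Rmin, Rmax; repeat destruct Rle_dec; lra).
  destruct Hc as [Hc | Hc].
  - rewrite !glue_in by exact Hc. destruct (SW t Hc) as (D1 & D2 & D3).
    repeat split; [apply (derivable_pt_lim_locally_eq W1 _ t _ a b)
                  | apply (derivable_pt_lim_locally_eq W2 _ t _ a b)
                  | apply (derivable_pt_lim_locally_eq W3 _ t _ a b)];
      auto; intros; apply glue_in; auto.
  - assert (Hg : forall y, a' < y < b' -> glue a b W1 V1 y = V1 y /\ glue a b W2 V2 y = V2 y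
                                          /\ glue a b W3 V3 y = V3 y).
    { intros y Hy. repeat split; apply glue_out; intros; apply Agree; auto. }
    destruct (Hg t Hc) as (-> & -> & ->). destruct (SV t Hc) as (D1 & D2 & D3).
    repeat split; [apply (derivable_pt_lim_locally_eq V1 _ t _ a' b')
                  | apply (derivable_pt_lim_locally_eq V2 _ t _ a' b')
                  | apply (derivable_pt_lim_locally_eq V3 _ t _ a' b')];
      auto; intros; apply Hg; auto.
Qed.

Definition reparam_on F (sig u v w : R -> R) (x y : R) : Prop :=
  exists a b W1 W2 W3, is_solution (autonomous F) a b W1 W2 W3 /\
    forall r, x <= r <= y ->
      a < sig r < b /\ u r = W1 (sig r) /\ v r = W2 (sig r) /\ w r = W3 (sig r).

Lemma reparam_glue F sig u v w x y x' y' :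
  locally_lipschitz (autonomous F) -> x' <= x <= y' -> x <= y ->
  reparam_on F sig u v w x y -> reparam_on F sig u v w x' y' -> reparam_on F sig u v w x' y.
Proof.
  intros HF Hx Hxy (a & b & W1 & W2 & W3 & SW & HW) (a' & b' & V1 & V2 & V3 & SV & HV).
  destruct (HW x) as (Hs & E1 & E2 & E3); [lra |].
  destruct (HV x) as (Hs' & E1' & E2' & E3'); [lra |].
  assert (Agree := solution_agree _ _ _ _ _ _ _ _ _ _ _ _ HF SW SV Hs Hs'
                     ltac:(congruence) ltac:(congruence) ltac:(congruence)).
  exists (Rmin a a'), (Rmax b b'), (glue a b W1 V1), (glue a b W2 V2), (glue a b W3 V3).
  split; [apply solution_glue; eauto |].
  intros r Hr. destruct (Rle_dec x r) as [Hxr | Hxr].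
  - destruct (HW r) as (Hin & -> & -> & ->); [lra |].
    rewrite !glue_in by exact Hin.
    pose proof (Rmin_l a a'). pose proof (Rmax_l b b'). repeat split; auto; lra.
  - destruct (HV r) as (Hin & -> & -> & ->); [lra |].
    rewrite !glue_out by (intros; apply Agree; auto).
    pose proof (Rmin_r a a'). pose proof (Rmax_r b b'). repeat split; auto; lra.
Qed.

Section Reparametrization.

Variables (F : R -> R -> R -> R * R * R) (C sig : R -> R) (lo hi : R) (u v w : R -> R).
Hypotheses (HF : locally_lipschitz (autonomous F)) (HC : continuity C)
  (Hsig : forall r, derivable_pt_lim sig r (C r))
  (Hsol : is_solution (scaled C F) lo hi u v w).

Lemma reparam_local m : lo < m < hi ->
  exists eta, 0 < eta /\ forall x y, m - eta < x -> y < m + eta -> reparam_on F sig u v w x y.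
Proof.
  intros Hm.
  destruct (local_existence F HF (sig m) (u m) (v m) (w m))
    as (dl & Hdl & V1 & V2 & V3 & SV & E1 & E2 & E3).
  destruct (derivable_continuous_pt sig m (exist _ (C m) (Hsig m)) dl Hdl) as (e0 & He0 & Hcont).
  set (eta := Rmin e0 (Rmin (m - lo) (hi - m))).
  assert (Heta : 0 < eta /\ eta <= e0 /\ eta <= m - lo /\ eta <= hi - m).
  { unfold eta. pose proof (Rmin_l e0 (Rmin (m - lo) (hi - m))).
    pose proof (Rmin_r e0 (Rmin (m - lo) (hi - m))). pose proof (Rmin_l (m - lo) (hi - m)).
    pose proof (Rmin_r (m - lo) (hi - m)). repeat split; try lra. repeat apply Rmin_pos; lra. }
  assert (Hin : forall r, m - eta < r < m + eta -> sig m - dl < sig r < sig m + dl).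
  { intros r Hr. destruct (Req_dec r m) as [-> | Hne]; [lra |].
    assert (T : Rabs (sig r - sig m) < dl).
    { apply Hcont.
      split; [split; [exact I | congruence] | simpl; unfold R_dist; apply Rabs_def1; lra]. }
    apply Rabs_def2 in T. lra. }
  assert (Scomp : is_solution (scaled C F) (m - eta) (m + eta)
                    (fun r => V1 (sig r)) (fun r => V2 (sig r)) (fun r => V3 (sig r))).
  { apply (solution_comp F C sig _ _ (sig m - dl) (sig m + dl)); auto. }
  exists eta. split; [lra |]. intros x y Hx Hy.
  exists (sig m - dl), (sig m + dl), V1, V2, V3. split; auto.
  intros r Hr. split; [apply Hin; lra |].
  apply (solution_unique (scaled C F) (m - eta) (m + eta) u v w
           (fun r => V1 (sig r)) (fun r => V2 (sig r)) (fun r => V3 (sig r)) m r); auto; try lra.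
  - apply scaled_locally_lipschitz; auto.
  - apply (solution_restrict _ lo hi); auto; lra.
Qed.

Lemma reparam_backward t0 s : lo < s <= t0 -> t0 < hi -> reparam_on F sig u v w s t0.
Proof.
  intros Hs Ht0.
  apply (real_induction_down (fun x => reparam_on F sig u v w x t0) s t0); [lra | |].
  - destruct (reparam_local t0) as (eta & Heta & H); [lra |]. apply H; lra.
  - intros m Hm. destruct (reparam_local m) as (eta & Heta & H); [lra |].
    exists eta. split; auto. intros x y Hy Hx Hxt Qx.
    apply (reparam_glue F sig u v w x t0 y x); auto; [lra | apply H; lra].
Qed.

End Reparametrization.

Lemma solution_ext X Y lo hi u v w :
  (forall s x y z, X s x y z = Y s x y z) -> is_solution X lo hi u v w -> is_solution Y lo hi u v w.
Proof. intros E S s Hs. rewrite <- E. apply S; auto. Qed.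

Lemma MRF_ext X Y t p q :
  (forall s x y z, X s x y z = Y s x y z) -> MRF X t p q -> MRF Y t p q.
Proof.
  intros E (lo & hi & u & v & w & H1 & H2 & S & Hpq). exists lo, hi, u, v, w.
  split; [lra | split; [lra | split; [apply (solution_ext X); auto | exact Hpq]]].
Qed.

Lemma MRF_time_change_nonneg F al t p q1 q2 :
  locally_lipschitz (autonomous F) -> continuity al -> odd_fun al -> 0 <= t ->
  MRF (autonomous F) t p q1 -> MRF (scaled (fun s => 1 + al s) F) t p q2 -> q1 = q2.
Proof.
  intros HF Hc Ho Ht (lo1 & hi1 & u1 & v1 & w1 & L1 & H1 & S1 & A1 & A2 & A3 & B1 & B2 & B3)
    (lo2 & hi2 & u2 & v2 & w2 & L2 & H2 & S2 & C1 & C2 & C3 & D1 & D2 & D3).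
  rewrite Rabs_right in L1, H1, L2, H2 by lra.
  (* The new time [sig] has [sig' = 1 + al] and fixes both [t] and [-t] because [al] is odd. *)
  set (sig := fun r => r + RInt al t r).
  assert (Hsig : forall r, derivable_pt_lim sig r (1 + al r)).
  { intros r. apply derivable_pt_lim_plus; [apply derivable_pt_lim_id |].
    apply derivable_pt_lim_RInt_continuous, Hc. }
  assert (sig_t : sig t = t) by (unfold sig; rewrite RInt_point; apply Rplus_0_r).
  assert (sig_mt : sig (- t) = - t) by (unfold sig; rewrite RInt_odd by auto; apply Rplus_0_r).
  assert (H1al : continuity (fun s => 1 + al s)) by solve_continuity.
  destruct (reparam_backward F (fun s => 1 + al s) sig lo2 hi2 u2 v2 w2 HF H1al Hsig S2 t (- t))
    as (a & b & W1 & W2 & W3 & SW & HW); [lra | lra |].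
  destruct (HW t) as (Ht1 & Et1 & Et2 & Et3); [lra |].
  destruct (HW (- t)) as (Ht2 & Em1 & Em2 & Em3); [lra |].
  rewrite sig_t in Ht1, Et1, Et2, Et3. rewrite sig_mt in Ht2, Em1, Em2, Em3.
  destruct (solution_agree _ _ _ _ _ _ _ _ _ _ _ t HF SW S1 Ht1 ltac:(lra)
              ltac:(congruence) ltac:(congruence) ltac:(congruence) (- t) Ht2 ltac:(lra))
    as (G1 & G2 & G3).
  apply triple_eq; congruence.
Qed.

Definition reverse (X : system) : system := fun s x y z => scale3 (-1) (X (- s) x y z).

Lemma solution_reverse X lo hi u v w :
  is_solution X lo hi u v w ->
  is_solution (reverse X) (- hi) (- lo) (fun r => u (- r)) (fun r => v (- r)) (fun r => w (- r)).
Proof.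
  intros S s Hs. destruct (S (- s)) as (D1 & D2 & D3); [lra |].
  unfold reverse, scale3, cx, cy, cz in *; cbn [fst snd] in *.
  assert (Hm1 : forall a, -1 * a = - a) by (intros; ring).
  rewrite !Hm1. repeat split; apply derivable_pt_lim_comp_opp; auto.
Qed.

Lemma MRF_reverse X t p q : MRF X t p q -> MRF (reverse X) (- t) p q.
Proof.
  intros (lo & hi & u & v & w & H1 & H2 & S & A1 & A2 & A3 & B1 & B2 & B3).
  exists (- hi), (- lo), (fun r => u (- r)), (fun r => v (- r)), (fun r => w (- r)).
  rewrite Rabs_Ropp, !Ropp_involutive.
  split; [lra | split; [lra | split; [apply solution_reverse; auto | repeat split; auto]]].
Qed.

Lemma solution_even X lo hi u v w t :
  locally_lipschitz X -> (forall s x y z, X (- s) x y z = scale3 (-1) (X s x y z)) ->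
  is_solution X lo hi u v w -> lo < - Rabs t -> Rabs t < hi ->
  u (- t) = u t /\ v (- t) = v t /\ w (- t) = w t.
Proof.
  intros HX Hodd S H1 H2. set (m := Rmin (- lo) hi).
  assert (Hm : lo <= - m /\ m <= hi /\ - m < t < m).
  { pose proof (Rabs_interval t lo hi H1 H2). unfold m, Rmin. destruct Rle_dec; lra. }
  assert (Sr : is_solution X (- hi) (- lo)
                 (fun r => u (- r)) (fun r => v (- r)) (fun r => w (- r))).
  { apply (solution_ext (reverse X)); [| apply solution_reverse; auto].
    intros s x y z. unfold reverse. rewrite Hodd.
    apply triple_eq; unfold scale3, cx, cy, cz; simpl; ring. }
  apply (solution_unique X (- m) m (fun r => u (- r)) (fun r => v (- r)) (fun r => w (- r))
           u v w 0 t HX); try lra;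
    try (eapply solution_restrict; eauto; lra); rewrite Ropp_0; reflexivity.
Qed.

Theorem same_MRF_time_change F al :
  locally_lipschitz (autonomous F) -> continuity al -> odd_fun al ->
  same_MRF (autonomous F) (scaled (fun s => 1 + al s) F).
Proof.
  intros HF Hc Ho t p q1 q2 M1 M2. destruct (Rle_dec 0 t) as [Ht | Ht].
  - apply (MRF_time_change_nonneg F al t p); auto.
  - (* Reversing time turns [al] into the odd function [- al] and [F] into [- F]. *)
    apply (MRF_time_change_nonneg (fun x y z => scale3 (-1) (F x y z)) (fun s => - al s) (- t) p);
      try lra.
    + intros A B. destruct (HF A B) as (L & HL & HLip). exists L. split; auto.
      intros s p' q' Hs Hp Hq. unfold field_at, autonomous in *.
      rewrite dist3_scale3, Rabs_m1, Rmult_1_l. apply (HLip s); auto.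
    + intros r. apply continuity_pt_opp, Hc.
    + intros r. rewrite Ho. reflexivity.
    + apply (MRF_reverse _ _ _ _ M1).
    + refine (MRF_ext _ _ _ _ _ _ (MRF_reverse _ _ _ _ M2)). intros s x y z.
      unfold reverse, scaled, scale3. rewrite Ho.
      apply triple_eq; unfold cx, cy, cz; simpl; ring.
Qed.

(** * Rotating frames *)

Definition radial (a e : R) : R -> R -> R -> R * R * R :=
  fun x y z => (a * x + x * z, a * y + y * z, e * z - (x ^ 2 + y ^ 2 + z ^ 2)).

Lemma radial_locally_lipschitz a e : locally_lipschitz (autonomous (radial a e)).
Proof.
  apply locally_lipschitz_of_coords.
  intros k [-> | [-> | ->]]; unfold field_at, autonomous, radial, cx, cy, cz; simpl;
    solve_locally_lipschitz.
Qed.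

Definition radial_weight (a : R) (p : R * R * R) : R :=
  4 * a * cz p + cx p ^ 2 + cy p ^ 2 + 2 * cz p ^ 2.

(* For [e = -2 a] the weight satisfies [h' = -2 C (a + z) h] while every quadratic form [Q] in
   [(x, y)] satisfies [Q' = 2 C (a + z) Q], so each product [h Q] is a first integral. *)
Lemma radial_first_integrals C a lo hi x y z t s :
  is_solution (scaled C (radial a (- 2 * a))) lo hi x y z -> lo < t < hi -> lo < s < hi ->
  radial_weight a (x s, y s, z s) * x s ^ 2 = radial_weight a (x t, y t, z t) * x t ^ 2 /\
  radial_weight a (x s, y s, z s) * (x s * y s) = radial_weight a (x t, y t, z t) * (x t * y t) /\
  radial_weight a (x s, y s, z s) * y s ^ 2 = radial_weight a (x t, y t, z t) * y t ^ 2.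
Proof.
  intros S Ht Hs. unfold radial_weight, cx, cy, cz; cbn [fst snd].
  repeat split;
    match goal with |- ?l = _ =>
      let f := eval pattern s in l in
      match f with ?g s => apply (eq_of_derivable_pt_lim_0 g lo hi); auto end end;
    intros r Hr; destruct (S r Hr) as (D1 & D2 & D3);
    unfold scaled, scale3, radial, cx, cy, cz in D1, D2, D3; cbn [fst snd] in D1, D2, D3;
    apply is_derive_Reals in D1, D2, D3; derive_along; ring.
Qed.

Lemma sin_cos_sq th : sin th ^ 2 + cos th ^ 2 = 1.
Proof. pose proof (sin2_cos2 th). unfold Rsqr in *. simpl. lra. Qed.

Lemma rot_norm th x y :
  (x * cos th - y * sin th) ^ 2 + (x * sin th + y * cos th) ^ 2 = x ^ 2 + y ^ 2.
Proof.
  transitivity ((x ^ 2 + y ^ 2) * (sin th ^ 2 + cos th ^ 2)); [ring |].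
  rewrite sin_cos_sq. ring.
Qed.

Definition rot (th : R) (q : R * R * R) : R * R * R :=
  (cx q * cos th - cy q * sin th, cx q * sin th + cy q * cos th, cz q).

Lemma rot_opp_rot th q : rot (- th) (rot th q) = q.
Proof.
  pose proof (sin_cos_sq th) as E.
  apply triple_eq; unfold rot, cx, cy, cz; simpl; rewrite ?cos_neg, ?sin_neg; auto.
  - transitivity (fst (fst q) * (sin th ^ 2 + cos th ^ 2)); [ring | rewrite E; ring].
  - transitivity (snd (fst q) * (sin th ^ 2 + cos th ^ 2)); [ring | rewrite E; ring].
Qed.

Lemma rot_inj th q1 q2 : rot th q1 = rot th q2 -> q1 = q2.
Proof. intros H. rewrite <- (rot_opp_rot th q1), <- (rot_opp_rot th q2), H. reflexivity. Qed.

Lemma derivable_pt_lim_rot (x y be : R -> R) s x' y' k :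
  derivable_pt_lim x s x' -> derivable_pt_lim y s y' -> derivable_pt_lim be s k ->
  derivable_pt_lim (fun r => x r * cos (be r) - y r * sin (be r)) s
    (x' * cos (be s) - y' * sin (be s) - k * (x s * sin (be s) + y s * cos (be s))) /\
  derivable_pt_lim (fun r => x r * sin (be r) + y r * cos (be r)) s
    (x' * sin (be s) + y' * cos (be s) + k * (x s * cos (be s) - y s * sin (be s))).
Proof.
  intros Hx Hy Hb. apply is_derive_Reals in Hx, Hy, Hb.
  split; apply is_derive_Reals; auto_derive;
    try (repeat split; eexists; eassumption);
    change (fun r => x r) with x; change (fun r => y r) with y; change (fun r => be r) with be;
    rewrite (is_derive_unique x s x' Hx), (is_derive_unique y s y' Hy),
      (is_derive_unique be s k Hb); ring.
Qed.

Definition rotating_radial (C k : R -> R) (a e : R) : system := fun s x y z =>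
  (C s * (a + z) * x + k s * y, C s * (a + z) * y - k s * x,
   C s * (e * z - (x ^ 2 + y ^ 2 + z ^ 2))).

(* In a frame turning by an angle [be] with [be' = k], the rotational part of the field
   disappears. *)
Lemma solution_rotate X lo hi x y z be k C a e :
  is_solution X lo hi x y z ->
  (forall s, lo < s < hi -> derivable_pt_lim be s (k s)) ->
  (forall s, lo < s < hi -> X s (x s) (y s) (z s) = rotating_radial C k a e s (x s) (y s) (z s)) ->
  is_solution (scaled C (radial a e)) lo hi
    (fun r => x r * cos (be r) - y r * sin (be r)) (fun r => x r * sin (be r) + y r * cos (be r)) z.
Proof.
  intros S Hb HX s Hs. destruct (S s Hs) as (D1 & D2 & D3).
  rewrite HX in D1, D2, D3 by exact Hs.
  unfold rotating_radial, cx, cy, cz in D1, D2, D3; cbn [fst snd] in D1, D2, D3.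
  destruct (derivable_pt_lim_rot x y be s _ _ _ D1 D2 (Hb s Hs)) as [R1 R2].
  unfold scaled, scale3, radial, cx, cy, cz; cbn [fst snd].
  split; [| split].
  - refine (eq_rect _ _ R1 _ _). ring.
  - refine (eq_rect _ _ R2 _ _). ring.
  - rewrite rot_norm. exact D3.
Qed.

Lemma MRF_rotate X t p q lo hi x y z be k C a e :
  lo < - Rabs t -> Rabs t < hi -> is_solution X lo hi x y z ->
  x t = cx p -> y t = cy p -> z t = cz p -> x (- t) = cx q -> y (- t) = cy q -> z (- t) = cz q ->
  (forall s, lo < s < hi -> derivable_pt_lim be s (k s)) -> be t = 0 ->
  (forall s, lo < s < hi -> X s (x s) (y s) (z s) = rotating_radial C k a e s (x s) (y s) (z s)) ->
  MRF (scaled C (radial a e)) t p (rot (be (- t)) q).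
Proof.
  intros H1 H2 S E1 E2 E3 F1 F2 F3 Hb Hbt HX.
  exists lo, hi, (fun r => x r * cos (be r) - y r * sin (be r)),
    (fun r => x r * sin (be r) + y r * cos (be r)), z.
  split; [lra | split; [lra | split; [eapply solution_rotate; eauto |]]].
  rewrite Hbt, cos_0, sin_0, E1, E2, E3, F1, F2, F3.
  unfold rot, cx, cy, cz; simpl. repeat split; ring.
Qed.

(* The angle [b (r - t)] of the first system and the angle [b (r - t) + RInt kap t r] of the
   second agree at [r = -t] because [kap] is odd. *)
Lemma same_MRF_rotating X1 X2 a b e al :
  continuity al -> odd_fun al ->
  (forall s x y z, X1 s x y z = rotating_radial (fun _ => 1) (fun _ => b) a e s x y z) ->
  (forall p, exists kap, continuity kap /\ odd_fun kap /\
     forall lo hi x y z t, is_solution X2 lo hi x y z -> lo < t < hi ->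
       x t = cx p -> y t = cy p -> z t = cz p ->
       forall s, lo < s < hi ->
         X2 s (x s) (y s) (z s)
         = rotating_radial (fun r => 1 + al r) (fun r => b + kap r) a e s (x s) (y s) (z s)) ->
  same_MRF X1 X2.
Proof.
  intros Hc Ho HX1 HX2 t p q1 q2
    (lo1 & hi1 & x1 & y1 & z1 & L1 & H1 & S1 & A1 & A2 & A3 & B1 & B2 & B3)
    (lo2 & hi2 & x2 & y2 & z2 & L2 & H2 & S2 & C1 & C2 & C3 & D1 & D2 & D3).
  assert (Hlin : forall s, derivable_pt_lim (fun r => b * (r - t)) s b).
  { intros s. apply is_derive_Reals. auto_derive; auto. ring. }
  assert (R1 : MRF (scaled (fun _ => 1) (radial a e)) t p (rot (b * (- t - t)) q1)).
  { apply (MRF_rotate X1 t p q1 lo1 hi1 x1 y1 z1 (fun r => b * (r - t)) (fun _ => b)); auto.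
    ring. }
  destruct (HX2 p) as (kap & Hkc & Hko & HX2p).
  assert (R2 : MRF (scaled (fun r => 1 + al r) (radial a e)) t p
                 (rot (b * (- t - t) + RInt kap t (- t)) q2)).
  { apply (MRF_rotate X2 t p q2 lo2 hi2 x2 y2 z2 (fun r => b * (r - t) + RInt kap t r)
             (fun r => b + kap r)); auto.
    - intros s _. apply derivable_pt_lim_plus; auto. apply derivable_pt_lim_RInt_continuous, Hkc.
    - rewrite RInt_point. change (b * (t - t) + 0 = 0). ring.
    - intros s Hs. apply (HX2p lo2 hi2 x2 y2 z2 t); auto. apply Rabs_interval; auto. }
  rewrite RInt_odd, Rplus_0_r in R2 by auto.
  apply (rot_inj (b * (- t - t))).
  apply (same_MRF_time_change (radial a e) al (radial_locally_lipschitz a e) Hc Ho t p); auto.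
  revert R1. apply MRF_ext. intros s x y z.
  unfold scaled, scale3, autonomous. apply triple_eq; unfold cx, cy, cz; simpl; ring.
Qed.

Lemma same_MRF_langford_i a b c d e al1 :
  continuity al1 -> odd_fun al1 -> same_MRF (langford a b c d e) (sys_i a b c d e al1).
Proof.
  intros Hc Ho t p q1 q2 M1 M2.
  apply (same_MRF_time_change (langford a b c d e 0) al1 (langford_locally_lipschitz a b c d e)
           Hc Ho t p); [exact M1 |].
  revert M2. apply MRF_ext. intros s x y z.
  unfold sys_i, scaled, scale3, langford. apply triple_eq; unfold cx, cy, cz; simpl; ring.
Qed.

Lemma same_MRF_langford_ii a b e al1 al2 al3 :
  continuity al1 -> continuity al2 -> continuity al3 ->
  odd_fun al1 -> odd_fun al2 -> odd_fun al3 ->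
  same_MRF (langford a b (- b) a e) (sys_ii a b e al1 al2 al3).
Proof.
  intros C1 C2 C3 O1 O2 O3.
  apply (same_MRF_rotating _ _ a b e (fun s => al1 s + al2 s)).
  - solve_continuity.
  - intros s. rewrite O1, O2. ring.
  - intros s x y z. apply triple_eq; unfold langford, rotating_radial, cx, cy, cz; simpl; ring.
  - intros p. exists (fun s => b * al1 s + al3 s). split; [solve_continuity | split].
    + intros s. rewrite O1, O3. ring.
    + intros lo hi x y z t _ _ _ _ _ s _.
      apply triple_eq; unfold sys_ii, rotating_radial, cx, cy, cz; simpl; ring.
Qed.

Definition langford_integral (a : R) (p : R * R * R) : R :=
  (cx p ^ 2 + cy p ^ 2) * (4 * a * cz p + cx p ^ 2 + cy p ^ 2 + 2 * cz p ^ 2).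

Lemma sys_iii_first_integral a b al1 al2 al3 al4 lo hi x y z t s :
  is_solution (sys_iii a b al1 al2 al3 al4) lo hi x y z -> lo < t < hi -> lo < s < hi ->
  langford_integral a (x s, y s, z s) = langford_integral a (x t, y t, z t).
Proof.
  intros S Ht Hs. unfold langford_integral, cx, cy, cz; cbn [fst snd].
  apply (eq_of_derivable_pt_lim_0 (fun r => (x r ^ 2 + y r ^ 2)
           * (4 * a * z r + x r ^ 2 + y r ^ 2 + 2 * z r ^ 2)) lo hi); auto.
  intros r Hr. destruct (S r Hr) as (D1 & D2 & D3).
  unfold sys_iii, cx, cy, cz in D1, D2, D3; cbn [fst snd] in D1, D2, D3.
  apply is_derive_Reals in D1, D2, D3. derive_along. ring.
Qed.

Lemma same_MRF_langford_iii a b al1 al2 al3 al4 :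
  continuity al1 -> continuity al2 -> continuity al3 -> continuity al4 ->
  odd_fun al1 -> odd_fun al2 -> odd_fun al3 -> odd_fun al4 ->
  same_MRF (langford a b (- b) a (- 2 * a)) (sys_iii a b al1 al2 al3 al4).
Proof.
  intros C1 C2 C3 C4 O1 O2 O3 O4.
  apply (same_MRF_rotating _ _ a b (- 2 * a) (fun s => al1 s + al2 s)).
  - solve_continuity.
  - intros s. rewrite O1, O2. ring.
  - intros s x y z. apply triple_eq; unfold langford, rotating_radial, cx, cy, cz; simpl; ring.
  - intros p. exists (fun s => b * al1 s + al3 s - langford_integral a p * al4 s).
    split; [solve_continuity | split].
    + intros s. rewrite O1, O3, O4. ring.
    + intros lo hi x y z t S Ht E1 E2 E3 s Hs.
      pose proof (sys_iii_first_integral a b al1 al2 al3 al4 lo hi x y z t s S Ht Hs) as Hh.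
      replace p with (x t, y t, z t) by (apply triple_eq; auto).
      rewrite <- Hh.
      apply triple_eq; unfold sys_iii, rotating_radial, langford_integral, cx, cy, cz; simpl; ring.
Qed.

Definition angle_speed (al2 al3 al4 al5 : R -> R) (P Q S s c n : R) : R :=
  al2 s + al3 s * (P * c ^ 2 + 2 * Q * c * n + S * n ^ 2)
  + al4 s * (- P * c * n + Q * (c ^ 2 - n ^ 2) + S * c * n)
  + al5 s * (P * n ^ 2 - 2 * Q * c * n + S * c ^ 2).

Definition sys_iv_speed (a : R) (al2 al3 al4 al5 : R -> R) (p : R * R * R) (s : R) : R :=
  al2 s + radial_weight a p * (cx p ^ 2 * al3 s + cx p * cy p * al4 s + cy p ^ 2 * al5 s).

(* The angular speed of (iv), written through coordinates rotated by [th]: the weighted quadratic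
   monomials become quadratic forms in [(cos th, sin th)]. *)
Lemma angle_speed_rot al2 al3 al4 al5 a th q s :
  sys_iv_speed a al2 al3 al4 al5 q s =
  angle_speed al2 al3 al4 al5
    (radial_weight a (rot th q) * cx (rot th q) ^ 2)
    (radial_weight a (rot th q) * (cx (rot th q) * cy (rot th q)))
    (radial_weight a (rot th q) * cy (rot th q) ^ 2) s (cos th) (sin th).
Proof.
  pose proof (sin_cos_sq th) as E.
  unfold sys_iv_speed, angle_speed, radial_weight, rot, cx, cy, cz; cbn [fst snd].
  transitivity (al2 s + (4 * a * snd q
    + (fst (fst q) ^ 2 + snd (fst q) ^ 2) * (sin th ^ 2 + cos th ^ 2)
    + 2 * snd q ^ 2) * (sin th ^ 2 + cos th ^ 2) ^ 2
    * (fst (fst q) ^ 2 * al3 s + fst (fst q) * snd (fst q) * al4 s + snd (fst q) ^ 2 * al5 s)).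
  - rewrite E. ring.
  - ring.
Qed.

Definition angle_system (al2 al3 al4 al5 : R -> R) (P Q S : R) : system := fun s c n _ =>
  (- n * angle_speed al2 al3 al4 al5 P Q S s c n, c * angle_speed al2 al3 al4 al5 P Q S s c n, 0).

Lemma angle_system_locally_lipschitz al2 al3 al4 al5 P Q S :
  continuity al2 -> continuity al3 -> continuity al4 -> continuity al5 ->
  locally_lipschitz (angle_system al2 al3 al4 al5 P Q S).
Proof.
  intros C2 C3 C4 C5. apply locally_lipschitz_of_coords.
  intros k [-> | [-> | ->]]; unfold field_at, angle_system, angle_speed, cx, cy, cz; simpl;
    solve_locally_lipschitz.
Qed.

Lemma angle_system_odd al2 al3 al4 al5 P Q S s c n w :
  odd_fun al2 -> odd_fun al3 -> odd_fun al4 -> odd_fun al5 ->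
  angle_system al2 al3 al4 al5 P Q S (- s) c n w
  = scale3 (-1) (angle_system al2 al3 al4 al5 P Q S s c n w).
Proof.
  intros O2 O3 O4 O5. unfold angle_system, angle_speed. rewrite O2, O3, O4, O5.
  apply triple_eq; unfold scale3, cx, cy, cz; simpl; ring.
Qed.

Lemma sys_iv_rotating a al1 al2 al3 al4 al5 s x y z :
  sys_iv a al1 al2 al3 al4 al5 s x y z =
  rotating_radial (fun r => 1 + al1 r) (fun r => sys_iv_speed a al2 al3 al4 al5 (x, y, z) r)
    a (- 2 * a) s x y z.
Proof.
  apply triple_eq; unfold sys_iv, rotating_radial, sys_iv_speed, radial_weight, cx, cy, cz; simpl;
    ring.
Qed.

Lemma rot_trivial th q : cos th = 1 -> sin th = 0 -> rot th q = q.
Proof.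
  intros Hc Hs. apply triple_eq; unfold rot, cx, cy, cz; cbn [fst snd]; rewrite ?Hc, ?Hs; ring.
Qed.

(* In the rotating frame the angle [be] obeys a planar system that is odd in time, so
   [(cos be, sin be)] is even in time and the total rotation over [[-t, t]] is trivial. *)
Lemma sys_iv_rotation_trivial a al1 al2 al3 al4 al5 lo hi x y z t be :
  continuity al2 -> continuity al3 -> continuity al4 -> continuity al5 ->
  odd_fun al2 -> odd_fun al3 -> odd_fun al4 -> odd_fun al5 ->
  is_solution (sys_iv a al1 al2 al3 al4 al5) lo hi x y z -> lo < - Rabs t -> Rabs t < hi ->
  (forall s, lo < s < hi ->
     derivable_pt_lim be s (sys_iv_speed a al2 al3 al4 al5 (x s, y s, z s) s)) ->
  be t = 0 -> cos (be (- t)) = 1 /\ sin (be (- t)) = 0.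
Proof.
  intros C2 C3 C4 C5 O2 O3 O4 O5 S H1 H2 Hbe Hbt.
  destruct (Rabs_interval t lo hi H1 H2) as [Ht _].
  assert (St := solution_rotate _ lo hi x y z be _ _ a (- 2 * a) S Hbe
                  (fun s _ => sys_iv_rotating a al1 al2 al3 al4 al5 s (x s) (y s) (z s))).
  set (q := fun r => rot (be r) (x r, y r, z r)).
  set (P := radial_weight a (q t) * cx (q t) ^ 2).
  set (Q := radial_weight a (q t) * (cx (q t) * cy (q t))).
  set (S0 := radial_weight a (q t) * cy (q t) ^ 2).
  assert (Hk : forall s, lo < s < hi ->
            sys_iv_speed a al2 al3 al4 al5 (x s, y s, z s) s
            = angle_speed al2 al3 al4 al5 P Q S0 s (cos (be s)) (sin (be s))).
  { intros s Hs. rewrite (angle_speed_rot al2 al3 al4 al5 a (be s)).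
    destruct (radial_first_integrals _ a lo hi _ _ z t s St Ht Hs) as (E1 & E2 & E3).
    unfold P, Q, S0, q. f_equal; [exact E1 | exact E2 | exact E3]. }
  assert (SY : is_solution (angle_system al2 al3 al4 al5 P Q S0) lo hi
                 (fun r => cos (be r)) (fun r => sin (be r)) (fun _ => 0)).
  { intros s Hs. unfold angle_system, cx, cy, cz; cbn [fst snd]. rewrite <- Hk by exact Hs.
    split; [| split; [| apply derivable_pt_lim_const]].
    - apply (derivable_pt_lim_comp be cos); [apply Hbe; auto | apply derivable_pt_lim_cos].
    - apply (derivable_pt_lim_comp be sin); [apply Hbe; auto | apply derivable_pt_lim_sin]. }
  destruct (solution_even _ lo hi _ _ _ t
              (angle_system_locally_lipschitz al2 al3 al4 al5 P Q S0 C2 C3 C4 C5)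
              (fun s c n w => angle_system_odd al2 al3 al4 al5 P Q S0 s c n w O2 O3 O4 O5) SY H1 H2)
    as (Ec & En & _).
  rewrite Ec, En, Hbt, cos_0, sin_0. auto.
Qed.

Lemma same_MRF_langford_iv a al1 al2 al3 al4 al5 :
  continuity al1 -> continuity al2 -> continuity al3 -> continuity al4 -> continuity al5 ->
  odd_fun al1 -> odd_fun al2 -> odd_fun al3 -> odd_fun al4 -> odd_fun al5 ->
  same_MRF (langford a 0 0 a (- 2 * a)) (sys_iv a al1 al2 al3 al4 al5).
Proof.
  intros C1 C2 C3 C4 C5 O1 O2 O3 O4 O5 t p q1 q2 M1
    (lo & hi & x & y & z & H1 & H2 & S & E1 & E2 & E3 & F1 & F2 & F3).
  destruct (Rabs_interval t lo hi H1 H2) as [Ht _].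
  set (k := fun s => sys_iv_speed a al2 al3 al4 al5 (x s, y s, z s) s).
  assert (Hk : forall r, lo < r < hi -> continuity_pt k r).
  { intros r Hr. destruct (S r Hr) as (D1 & D2 & D3).
    assert (continuity_pt x r) by (apply derivable_continuous_pt; eexists; exact D1).
    assert (continuity_pt y r) by (apply derivable_continuous_pt; eexists; exact D2).
    assert (continuity_pt z r) by (apply derivable_continuous_pt; eexists; exact D3).
    unfold k, sys_iv_speed, radial_weight, cx, cy, cz; cbn [fst snd]. solve_continuity_pt. }
  assert (Hbe : forall s, lo < s < hi -> derivable_pt_lim (fun r => RInt k t r) s (k s)).
  { intros s Hs. apply (derivable_pt_lim_RInt k lo hi); auto. }
  assert (R2 := MRF_rotate _ t p q2 lo hi x y z (fun r => RInt k t r) k (fun r => 1 + al1 r)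
                  a (- 2 * a) H1 H2 S E1 E2 E3 F1 F2 F3 Hbe (RInt_point _ _)
                  (fun s _ => sys_iv_rotating a al1 al2 al3 al4 al5 s (x s) (y s) (z s))).
  destruct (sys_iv_rotation_trivial a al1 al2 al3 al4 al5 lo hi x y z t (fun r => RInt k t r)
              C2 C3 C4 C5 O2 O3 O4 O5 S H1 H2 Hbe (RInt_point _ _)) as [Hc Hs].
  rewrite rot_trivial in R2 by auto.
  apply (same_MRF_time_change (radial a (- 2 * a)) al1 (radial_locally_lipschitz a (- 2 * a))
           C1 O1 t p); auto.
  revert M1. apply MRF_ext. intros s x' y' z'.
  apply triple_eq; unfold langford, autonomous, radial, cx, cy, cz; simpl; ring.
Qed.

Theorem theorem2 (a b c d e : R) (al1 al2 al3 al4 al5 : R -> R) :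
  continuity al1 -> continuity al2 -> continuity al3 ->
  continuity al4 -> continuity al5 ->
  odd_fun al1 -> odd_fun al2 -> odd_fun al3 -> odd_fun al4 -> odd_fun al5 ->
  same_MRF (langford a b c d e) (sys_i a b c d e al1) /\
  (c = - b -> d = a ->
     same_MRF (langford a b c d e) (sys_ii a b e al1 al2 al3)) /\
  (c = - b -> d = a -> e = - 2 * a ->
     same_MRF (langford a b c d e) (sys_iii a b al1 al2 al3 al4)) /\
  (c = 0 -> b = 0 -> d = a -> e = - 2 * a ->
     same_MRF (langford a b c d e) (sys_iv a al1 al2 al3 al4 al5)).
Proof.
  intros C1 C2 C3 C4 C5 O1 O2 O3 O4 O5.
  split; [| split; [| split]].
  - apply same_MRF_langford_i; auto.
  - intros -> ->. apply same_MRF_langford_ii; auto.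
  - intros -> -> ->. apply same_MRF_langford_iii; auto.
  - intros -> -> -> ->. apply same_MRF_langford_iv; auto.
Qed.
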